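(* Let $\mathcal{F}=(\mu_n,\mathcal{S}_n,K_n,\pi_n)_{n\ge1}$ be a family of irreducible, reversible discrete-time finite Markov chains and $\mathcal{F}_c$ the family of associated continuous-time chains (generators $K_n-I$). Assume $\inf_{n,x}K_n(x,x)>1/2$, $\pi_n(|\mu_n/\pi_n|^2)\to\infty$, and that there is $\epsilon_0>0$ such that $T_{n,2}(\mu_n,\epsilon_0)\to\infty$ or $T^{(c)}_{n,2}(\mu_n,\epsilon_0)\to\infty$. Then $\mathcal{F}$ has an $L^2$-cutoff if and only if $\mathcal{F}_c$ has an $L^2$-cutoff.
   Context: $T_{n,2}$ and $T^{(c)}_{n,2}$ are the $L^2$-mixing times of the $n$th chains in $\mathcal{F}$ and $\mathcal{F}_c$: $T_2(\mu,\epsilon)=\min\{t\ge0:d_2(\mu,t)\le\epsilon\}$ where $d_2(\mu,m)=\|\mu K^m/\pi-1\|_{L^2(\pi)}$ (integer $m$) in discrete time and $d_2(\mu,t)=\|\mu e^{t(K-I)}/\pi-1\|_{L^2(\pi)}$ in continuous time, $\|f\|^2_{L^2(\pi)}=\sum_y|f(y)|^2\pi(y)$. $\pi(|\mu/\pi|^2)=\sum_y\mu(y)^2/\pi(y)$. $L^2$-cutoff: there is $t_n>0$ with $d_{n,2}(\mu_n,(1+a)t_n)\to0$ and $d_{n,2}(\mu_n,(1-a)t_n)\to\infty$ for all $a\in(0,1)$ (in discrete time with $\lceil(1+a)t_n\rceil$, $\lfloor(1-a)t_n\rfloor$). *)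

From Stdlib Require Import Reals ZArith ClassicalEpsilon.
Open Scope R_scope.

(* States of a chain with N states are the naturals 0..N-1. *)
Fixpoint sumN (N : nat) (f : nat -> R) : R :=
  match N with O => 0 | S m => sumN m f + f m end.

Fixpoint Kpow (N : nat) (K : nat -> nat -> R) (m : nat) : nat -> nat -> R :=
  match m with
  | O => fun x y => if Nat.eqb x y then 1 else 0
  | S m' => fun x y => sumN N (fun z => Kpow N K m' x z * K z y)
  end.

Definition is_prob (N : nat) (p : nat -> R) : Prop :=
  (forall x, (x < N)%nat -> 0 <= p x) /\ sumN N p = 1.

Definition is_markov_kernel (N : nat) (K : nat -> nat -> R) : Prop :=
  forall x, (x < N)%nat -> is_prob N (K x).

Definition irreducible (N : nat) (K : nat -> nat -> R) : Prop :=
  forall x y, (x < N)%nat -> (y < N)%nat -> exists m, 0 < Kpow N K m x y.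

Definition reversible (N : nat) (K : nat -> nat -> R) (pi : nat -> R) : Prop :=
  forall x y, (x < N)%nat -> (y < N)%nat -> pi x * K x y = pi y * K y x.

Definition series_val (a : nat -> R) : R :=
  epsilon (inhabits 0) (fun l => Un_cv (fun m => sum_f_R0 a m) l).

(* continuous-time kernel e^{t(K-I)}(x,y) = e^{-t} sum_k t^k/k! K^k(x,y) *)
Definition Ht (N : nat) (K : nat -> nat -> R) (t : R) (x y : nat) : R :=
  exp (- t) * series_val (fun k => t ^ k / INR (fact k) * Kpow N K k x y).

Definition L2dist (N : nat) (pi nu : nat -> R) : R :=
  sqrt (sumN N (fun y => (nu y / pi y - 1) ^ 2 * pi y)).

Definition d2 (N : nat) (K : nat -> nat -> R) (pi mu : nat -> R) (m : nat) : R :=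
  L2dist N pi (fun y => sumN N (fun x => mu x * Kpow N K m x y)).

Definition d2c (N : nat) (K : nat -> nat -> R) (pi mu : nat -> R) (t : R) : R :=
  L2dist N pi (fun y => sumN N (fun x => mu x * Ht N K t x y)).

Definition T2 (N : nat) (K : nat -> nat -> R) (pi mu : nat -> R) (eps : R) : nat :=
  epsilon (inhabits 0%nat) (fun m => d2 N K pi mu m <= eps /\
     forall k, d2 N K pi mu k <= eps -> (m <= k)%nat).

Definition T2c (N : nat) (K : nat -> nat -> R) (pi mu : nat -> R) (eps : R) : R :=
  epsilon (inhabits 0) (fun t => 0 <= t /\ d2c N K pi mu t <= eps /\
     forall s, 0 <= s -> d2c N K pi mu s <= eps -> t <= s).

Definition nfloor (x : R) : nat := Z.to_nat (Int_part x).
Definition nceil (x : R) : nat := Z.to_nat (- Int_part (- x)).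

Definition L2_cutoff (N : nat -> nat) (K : nat -> nat -> nat -> R)
  (pi mu : nat -> nat -> R) : Prop :=
  exists tn : nat -> R, (forall n, 0 < tn n) /\
    forall a, 0 < a < 1 ->
      Un_cv (fun n => d2 (N n) (K n) (pi n) (mu n) (nceil ((1 + a) * tn n))) 0 /\
      cv_infty (fun n => d2 (N n) (K n) (pi n) (mu n) (nfloor ((1 - a) * tn n))).

Definition L2_cutoff_c (N : nat -> nat) (K : nat -> nat -> nat -> R)
  (pi mu : nat -> nat -> R) : Prop :=
  exists tn : nat -> R, (forall n, 0 < tn n) /\
    forall a, 0 < a < 1 ->
      Un_cv (fun n => d2c (N n) (K n) (pi n) (mu n) ((1 + a) * tn n)) 0 /\
      cv_infty (fun n => d2c (N n) (K n) (pi n) (mu n) ((1 - a) * tn n)).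

From Pilot Require Import Defs.
From Stdlib Require Import Reals ZArith ClassicalEpsilon Lra Lia Classical.
Open Scope R_scope.

(* Reversibility makes [K] self-adjoint in [L^2(pi)]. By the spectral theorem
   [d_2(mu, m)^2 = sum_i w_i lam_i^(2 m)] and [d_2^c(mu, t)^2 = sum_i w_i exp (- 2 t (1 - lam_i))],
   with weights [w_i >= 0] of total mass [pi(|mu/pi|^2) - 1], and the holding bound
   [K(x, x) >= c > 1/2] puts every eigenvalue of positive weight in [[2 c - 1, 1)]. Both distances
   are thus exponential sums [sum_i w_i exp (- t rate_i)], with the rates [- 2 ln lam_i] and
   [2 (1 - lam_i)], which agree up to a constant factor and to second order. For such sums a cutoff
   is equivalent to a steep slope [T * (- E'(T))] at the hitting times [T] of small levels, and
   this criterion transfers between comparable rates once the hitting times diverge. *)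

Lemma sumN_ext N f g : (forall i, (i < N)%nat -> f i = g i) -> sumN N f = sumN N g.
Proof.
  induction N; simpl; intros H; auto.
  rewrite IHN by (intros; apply H; lia). rewrite H by lia. auto.
Qed.

Lemma sumN_plus N f g : sumN N (fun i => f i + g i) = sumN N f + sumN N g.
Proof. induction N; simpl; [lra | rewrite IHN; lra]. Qed.

Lemma sumN_minus N f g : sumN N (fun i => f i - g i) = sumN N f - sumN N g.
Proof. induction N; simpl; [lra | rewrite IHN; lra]. Qed.

Lemma sumN_scal_l N c f : c * sumN N f = sumN N (fun i => c * f i).
Proof. induction N; simpl; [lra | rewrite <- IHN; lra]. Qed.

Lemma sumN_scal_r N c f : sumN N f * c = sumN N (fun i => f i * c).
Proof. induction N; simpl; [lra | rewrite <- IHN; lra]. Qed.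

Lemma sumN_0 N : sumN N (fun _ => 0) = 0.
Proof. induction N; simpl; [lra | rewrite IHN; lra]. Qed.

Lemma sumN_eq0 N f : (forall i, (i < N)%nat -> f i = 0) -> sumN N f = 0.
Proof. intros H. rewrite (sumN_ext N f (fun _ => 0)) by auto. apply sumN_0. Qed.

Lemma sumN_le N f g : (forall i, (i < N)%nat -> f i <= g i) -> sumN N f <= sumN N g.
Proof.
  induction N; simpl; intros H; [lra|].
  assert (f N <= g N) by (apply H; lia).
  assert (sumN N f <= sumN N g) by (apply IHN; intros; apply H; lia). lra.
Qed.

Lemma sumN_nonneg N f : (forall i, (i < N)%nat -> 0 <= f i) -> 0 <= sumN N f.
Proof. intros H. rewrite <- (sumN_0 N). apply sumN_le. auto. Qed.

Lemma sumN_lt N f g : (forall i, (i < N)%nat -> f i <= g i) ->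
  (exists i, (i < N)%nat /\ f i < g i) -> sumN N f < sumN N g.
Proof.
  induction N; simpl; intros H [i [Hi Hlt]]; [lia|].
  assert (f N <= g N) by (apply H; lia).
  destruct (Nat.eq_dec i N) as [->|Hne].
  - assert (sumN N f <= sumN N g) by (apply sumN_le; intros; apply H; lia). lra.
  - assert (sumN N f < sumN N g).
    { apply IHN; [intros; apply H; lia | exists i; split; [lia | auto]]. }
    lra.
Qed.

Lemma sumN_pos_exists N f : 0 < sumN N f -> exists i, (i < N)%nat /\ 0 < f i.
Proof.
  intros H. apply NNPP. intros Hn.
  assert (sumN N f <= 0).
  { rewrite <- (sumN_0 N). apply sumN_le. intros i Hi.
    apply Rnot_lt_le. intros Hl. apply Hn. exists i; auto. }
  lra.
Qed.

Lemma sumN_eq0_nonneg N f : (forall i, (i < N)%nat -> 0 <= f i) -> sumN N f = 0 ->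
  forall i, (i < N)%nat -> f i = 0.
Proof.
  intros H Hs i Hi. destruct (H i Hi) as [Hp|]; auto. exfalso.
  assert (sumN N (fun _ => 0) < sumN N f) by (apply sumN_lt; [auto | exists i; auto]).
  rewrite sumN_0 in *. lra.
Qed.

Lemma sumN_exchange N M (f : nat -> nat -> R) :
  sumN N (fun i => sumN M (fun j => f i j)) = sumN M (fun j => sumN N (fun i => f i j)).
Proof.
  induction N; simpl.
  - rewrite sumN_0. auto.
  - rewrite IHN, <- sumN_plus. auto.
Qed.

Lemma sumN_delta N x0 (a : nat -> R) : (x0 < N)%nat ->
  sumN N (fun y => if Nat.eqb x0 y then a y else 0) = a x0.
Proof.
  induction N; intros H; simpl; [lia|].
  destruct (Nat.eq_dec x0 N) as [->|Hne].
  - rewrite Nat.eqb_refl, sumN_eq0; [lra|].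
    intros i Hi. destruct (Nat.eqb_spec N i); [lia | auto].
  - rewrite IHN by lia. destruct (Nat.eqb_spec x0 N); [lia | lra].
Qed.

Lemma sumN_delta_r N x0 (a : nat -> R) : (x0 < N)%nat ->
  sumN N (fun y => if Nat.eqb y x0 then a y else 0) = a x0.
Proof.
  intros H. rewrite <- (sumN_delta N x0 a H). apply sumN_ext. intros i _.
  rewrite Nat.eqb_sym. auto.
Qed.

Lemma sumN_abs N f : Rabs (sumN N f) <= sumN N (fun i => Rabs (f i)).
Proof.
  induction N; simpl.
  - rewrite Rabs_R0; lra.
  - eapply Rle_trans; [apply Rabs_triang | lra].
Qed.

Lemma sumN_argmax N (h : nat -> R) : (1 <= N)%nat ->
  exists x0, (x0 < N)%nat /\ forall x, (x < N)%nat -> h x <= h x0.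
Proof.
  induction N; intros HN; [lia|].
  destruct (Nat.eq_dec N 0) as [->|HN0].
  { exists 0%nat. split; [lia|]. intros x Hx. replace x with 0%nat by lia. lra. }
  destruct IHN as [x0 [Hx0 Hm]]; [lia|].
  destruct (Rle_dec (h x0) (h N)).
  - exists N. split; [lia|]. intros x Hx.
    destruct (Nat.eq_dec x N); [subst; lra | specialize (Hm x ltac:(lia)); lra].
  - exists x0. split; [lia|]. intros x Hx.
    destruct (Nat.eq_dec x N); [subst; lra | apply Hm; lia].
Qed.

Lemma exp_le_compat x y : x <= y -> exp x <= exp y.
Proof. intros [H|H]; [left; apply exp_increasing; auto | subst; lra]. Qed.

Definition expsum (N : nat) (w r : nat -> R) (t : R) : R :=
  sumN N (fun i => w i * exp (- t * r i)).

Definition expslope (N : nat) (w r : nat -> R) (t : R) : R :=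
  sumN N (fun i => w i * r i * exp (- t * r i)).

Lemma expsum_continuous N w r : continuity (expsum N w r).
Proof.
  induction N; unfold expsum; simpl.
  - apply continuity_const. intros x y; auto.
  - apply (continuity_plus (expsum N w r) (fun t => w N * exp (- t * r N))); auto.
    apply derivable_continuous. intro x. reg.
Qed.

Lemma expsum_rate_dominated N w r r' kappa t :
  (forall i, (i < N)%nat -> 0 <= w i) -> (forall i, (i < N)%nat -> r' i <= kappa * r i) ->
  0 < kappa -> 0 <= t -> expsum N w r t <= expsum N w r' (t / kappa).
Proof.
  intros Hw Hk Hkp Ht. apply sumN_le. intros i Hi. apply Rmult_le_compat_l; auto.
  apply exp_le_compat. specialize (Hk i Hi).
  assert (t / kappa * r' i <= t / kappa * (kappa * r i)).
  { apply Rmult_le_compat_l; auto.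
    unfold Rdiv. apply Rmult_le_pos; [lra | left; apply Rinv_0_lt_compat; lra]. }
  replace (t / kappa * (kappa * r i)) with (t * r i) in H by (field; lra). lra.
Qed.

Lemma exp_term_vanishes a b eps : 0 <= a -> 0 < b -> 0 < eps ->
  forall t, a / (eps * b) <= t -> a * exp (- t * b) < eps.
Proof.
  intros Ha Hb He t Ht.
  assert (Htb : a / eps <= t * b).
  { apply (Rmult_le_compat_r b) in Ht; [|lra].
    replace (a / (eps * b) * b) with (a / eps) in Ht by (field; lra). lra. }
  assert (Hexp := exp_ineq1_le (t * b)).
  replace (- t * b) with (- (t * b)) by ring. rewrite exp_Ropp.
  apply (Rmult_lt_reg_r (exp (t * b))); [apply exp_pos|].
  rewrite Rmult_assoc, Rinv_l, Rmult_1_r by (apply Rgt_not_eq, exp_pos).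
  assert (a <= eps * (t * b)).
  { apply (Rmult_le_compat_l eps) in Htb; [|lra].
    replace (eps * (a / eps)) with a in Htb by (field; lra). lra. }
  nra.
Qed.

Lemma expsum_vanishes N w r eps : (forall i, (i < N)%nat -> 0 <= w i) ->
  (forall i, (i < N)%nat -> 0 < r i) -> 0 < eps ->
  exists B, forall t, B <= t -> expsum N w r t < eps.
Proof.
  revert eps. induction N as [|N IH]; intros eps Hw Hr Heps.
  { exists 0. intros t _. unfold expsum. simpl. auto. }
  destruct (IH (eps / 2)) as [B HB]; [intros; apply Hw; lia | intros; apply Hr; lia | lra |].
  exists (Rmax B (w N / (eps / 2 * r N))). intros t Ht.
  unfold expsum; simpl. fold (expsum N w r t).
  assert (expsum N w r t < eps / 2) by (apply HB; eapply Rle_trans; [apply Rmax_l | eauto]).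
  assert (w N * exp (- t * r N) < eps / 2).
  { apply exp_term_vanishes; [apply Hw; lia | apply Hr; lia | lra |].
    eapply Rle_trans; [apply Rmax_r | eauto]. }
  lra.
Qed.

Section ExpSum.
Variable N : nat.
Variables w r : nat -> R.
Hypothesis Hw : forall i, (i < N)%nat -> 0 <= w i.
Hypothesis Hr : forall i, (i < N)%nat -> 0 < r i.

Lemma expsum_nonneg t : 0 <= expsum N w r t.
Proof. apply sumN_nonneg. intros i Hi. apply Rmult_le_pos; [auto | left; apply exp_pos]. Qed.

Lemma expslope_nonneg t : 0 <= expslope N w r t.
Proof.
  apply sumN_nonneg. intros i Hi.
  apply Rmult_le_pos; [apply Rmult_le_pos; [auto | left; auto] | left; apply exp_pos].
Qed.

Lemma expsum_0 : expsum N w r 0 = sumN N w.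
Proof.
  apply sumN_ext. intros i _. replace (- 0 * r i) with 0 by ring. rewrite exp_0. ring.
Qed.

Lemma expsum_antitone t1 t2 : t1 <= t2 -> expsum N w r t2 <= expsum N w r t1.
Proof.
  intros H. apply sumN_le. intros i Hi. apply Rmult_le_compat_l; [auto|].
  apply exp_le_compat. specialize (Hr i Hi). nra.
Qed.

Lemma expsum_decreasing t1 t2 : 0 < sumN N w -> t1 < t2 ->
  expsum N w r t2 < expsum N w r t1.
Proof.
  intros Hs H. apply sumN_lt.
  - intros i Hi. apply Rmult_le_compat_l; [auto|].
    apply exp_le_compat. specialize (Hr i Hi). nra.
  - destruct (sumN_pos_exists N w Hs) as [i [Hi Hwi]]. exists i. split; auto.
    apply Rmult_lt_compat_l; auto. apply exp_increasing. specialize (Hr i Hi). nra.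
Qed.

Lemma expsum_hits eps : 0 < eps < sumN N w -> exists T, 0 < T /\ expsum N w r T = eps.
Proof.
  intros [He1 He2].
  destruct (expsum_vanishes N w r eps Hw Hr He1) as [B HB].
  assert (Hg : continuity (fun t => expsum N w r t - eps)).
  { apply (continuity_minus (expsum N w r) (fun _ => eps)); [apply expsum_continuous|].
    apply continuity_const. intros x y; auto. }
  assert (HB1 : expsum N w r (Rmax B 1) < eps) by (apply HB; apply Rmax_l).
  destruct (IVT_cor _ 0 (Rmax B 1) Hg) as [T [[HT1 HT2] HT]].
  - eapply Rle_trans; [|apply Rmax_r]. lra.
  - rewrite expsum_0. nra.
  - exists T. split; [|lra].
    destruct HT1 as [|<-]; auto. rewrite expsum_0 in HT. lra.
Qed.

Lemma expsum_tangent T t :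
  expsum N w r T - (t - T) * expslope N w r T <= expsum N w r t.
Proof.
  unfold expsum, expslope. rewrite sumN_scal_l, <- sumN_minus. apply sumN_le. intros i Hi.
  replace (w i * exp (- t * r i)) with (w i * exp (- T * r i) * exp (- (t - T) * r i))
    by (rewrite Rmult_assoc, <- exp_plus; f_equal; f_equal; ring).
  assert (0 <= w i * exp (- T * r i)) by (apply Rmult_le_pos; [auto | left; apply exp_pos]).
  assert (Hexp := exp_ineq1_le (- (t - T) * r i)). nra.
Qed.

Lemma expsum_hitting_order T T1 a : 0 < a -> 0 < expsum N w r T ->
  expsum N w r T1 <= a / (1 + a) * (T * expslope N w r T) -> T <= (1 + a) * T1.
Proof.
  intros Ha HE Hslope. apply Rnot_lt_le. intros Hlt.
  assert (Htan := expsum_tangent T T1).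
  assert (HS := expslope_nonneg T).
  assert (a / (1 + a) * T <= T - T1).
  { replace (a / (1 + a) * T) with (T - T / (1 + a)) by (field; lra).
    enough (T1 <= T / (1 + a)) by lra.
    apply (Rmult_le_reg_l (1 + a)); [lra|].
    replace ((1 + a) * (T / (1 + a))) with T by (field; lra). lra. }
  assert (a / (1 + a) * T * expslope N w r T <= (T - T1) * expslope N w r T)
    by (apply Rmult_le_compat_r; auto).
  nra.
Qed.

Definition indic_le (b x : R) : R := if Rle_dec x b then 1 else 0.

(* Markov's inequality for the weights [w i * exp (- T * r i)]. *)
Lemma expsum_low_rates T Kc : 0 < T -> 0 < Kc ->
  expsum N w r T - T / Kc * expslope N w r T
  <= sumN N (fun i => w i * exp (- T * r i) * indic_le (Kc / T) (r i)).
Proof.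
  intros HT HK. unfold expsum, expslope. rewrite sumN_scal_l, <- sumN_minus.
  apply sumN_le. intros i Hi. unfold indic_le.
  assert (H0 : 0 <= w i * exp (- T * r i)) by (apply Rmult_le_pos; [auto | left; apply exp_pos]).
  replace (T / Kc * (w i * r i * exp (- T * r i))) with (T / Kc * r i * (w i * exp (- T * r i))) by ring.
  assert (0 <= T / Kc * r i) by (apply Rmult_le_pos; left; [apply Rdiv_lt_0_compat | apply Hr]; auto).
  destruct (Rle_dec (r i) (Kc / T)) as [Hle|Hle]; [nra|].
  assert (1 < T / Kc * r i).
  { apply Rnot_le_lt in Hle. apply (Rmult_lt_compat_l (T / Kc)) in Hle; [|apply Rdiv_lt_0_compat; auto].
    replace (T / Kc * (Kc / T)) with 1 in Hle by (field; lra). auto. }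
  nra.
Qed.

End ExpSum.

Section RateComparison.
Variable N : nat.
Variables w r r' : nat -> R.
Hypothesis Hw : forall i, (i < N)%nat -> 0 <= w i.
Hypothesis Hr' : forall i, (i < N)%nat -> 0 < r' i.
Variable C : R.
Hypothesis HC0 : 0 <= C.
Hypothesis HC : forall i, (i < N)%nat -> r i <= r' i + C * r' i ^ 2.

(* On the rates [r' i <= Kc / T] one has
   [rho * T * r i <= T * r' i + (rho - 1) * Kc + rho * C * Kc ^ 2 / T]. *)
Lemma expsum_lower_by_low_rates T rho Kc : 0 < T -> 1 <= rho -> 0 < Kc ->
  exp (- ((rho - 1) * Kc) - rho * C * Kc ^ 2 / T)
    * sumN N (fun i => w i * exp (- T * r' i) * indic_le (Kc / T) (r' i))
  <= expsum N w r (rho * T).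
Proof.
  intros HT Hrho HK. rewrite sumN_scal_l. apply sumN_le. intros i Hi. unfold indic_le.
  destruct (Rle_dec (r' i) (Kc / T)) as [H|H];
    [|rewrite !Rmult_0_r; apply Rmult_le_pos; [auto | left; apply exp_pos]].
  rewrite Rmult_1_r, Rmult_comm, Rmult_assoc, <- exp_plus. apply Rmult_le_compat_l; [auto|].
  apply exp_le_compat. specialize (HC i Hi). specialize (Hr' i Hi).
  assert (Hr1 : T * r' i <= Kc).
  { apply (Rmult_le_compat_l T) in H; [|lra].
    replace (T * (Kc / T)) with Kc in H by (field; lra). auto. }
  assert (Hr2 : T * r' i ^ 2 <= Kc ^ 2 / T).
  { apply (Rmult_le_reg_l T); auto. replace (T * (Kc ^ 2 / T)) with (Kc ^ 2) by (field; lra).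
    replace (T * (T * r' i ^ 2)) with ((T * r' i) ^ 2) by ring. apply pow_incr. nra. }
  assert (rho * T * r i <= rho * T * r' i + rho * C * (T * r' i ^ 2)).
  { replace (rho * T * r' i + rho * C * (T * r' i ^ 2)) with (rho * T * (r' i + C * r' i ^ 2)) by ring.
    apply Rmult_le_compat_l; nra. }
  assert (rho * C * (T * r' i ^ 2) <= rho * C * (Kc ^ 2 / T)) by (apply Rmult_le_compat_l; nra).
  assert ((rho - 1) * (T * r' i) <= (rho - 1) * Kc) by (apply Rmult_le_compat_l; lra).
  unfold Rdiv in *. nra.
Qed.

Variable kappa : R.
Hypothesis Hkappa : 1 <= kappa.
Hypothesis Hk : forall i, (i < N)%nat -> r' i <= kappa * r i.

(* Most of the mass of [expsum N w r' T] sits on the rates [r' i <= Kc / T]; there [r i] is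
   not much larger, so the [r]-sum is still large at the later time [3 * kappa * T]. *)
Lemma expslope_lower_bound eps Kc tn T : 0 < eps -> 0 < Kc -> 0 < tn -> 1 <= T ->
  expsum N w r' T = eps -> eps < expsum N w r (tn / 2) ->
  expsum N w r (3 / 2 * tn) < eps / 2 * exp (- ((3 * kappa - 1) * Kc) - 3 * kappa * C * Kc ^ 2) ->
  Kc / 2 * eps < T * expslope N w r' T.
Proof.
  intros Heps HKc Htn HT HTe Hearly Hlate. apply Rnot_le_lt. intros Hslope.
  assert (Hlow := expsum_low_rates N w r' Hw Hr' T Kc ltac:(lra) HKc).
  assert (Hmass : eps / 2 <= sumN N (fun i => w i * exp (- T * r' i) * indic_le (Kc / T) (r' i))).
  { rewrite HTe in Hlow. enough (T / Kc * expslope N w r' T <= eps / 2) by lra.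
    apply (Rmult_le_reg_l Kc); [lra|].
    replace (Kc * (T / Kc * expslope N w r' T)) with (T * expslope N w r' T) by (field; lra). lra. }
  assert (Hconc := expsum_lower_by_low_rates T (3 * kappa) Kc ltac:(lra) ltac:(lra) HKc).
  assert (Hexp : exp (- ((3 * kappa - 1) * Kc) - 3 * kappa * C * Kc ^ 2)
                 <= exp (- ((3 * kappa - 1) * Kc) - 3 * kappa * C * Kc ^ 2 / T)).
  { apply exp_le_compat. assert (0 <= 3 * kappa * C * Kc ^ 2) by (apply Rmult_le_pos; nra).
    enough (3 * kappa * C * Kc ^ 2 / T <= 3 * kappa * C * Kc ^ 2) by lra.
    unfold Rdiv. rewrite <- (Rmult_1_r (3 * kappa * C * Kc ^ 2)) at 2.
    apply Rmult_le_compat_l; auto. rewrite <- Rinv_1. apply Rinv_le_contravar; lra. }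
  assert (Hlater : tn / 2 < kappa * T).
  { apply Rnot_le_lt. intros Hle.
    assert (H1 := expsum_rate_dominated N w r r' kappa (tn / 2) Hw Hk ltac:(lra) ltac:(lra)).
    assert (H2 : expsum N w r' (tn / 2 / kappa) <= expsum N w r' T).
    { apply expsum_antitone; auto. apply (Rmult_le_reg_l kappa); [lra|].
      replace (kappa * (tn / 2 / kappa)) with (tn / 2) by (field; lra). lra. }
    lra. }
  assert (Hmono : expsum N w r (3 * kappa * T) <= expsum N w r (3 / 2 * tn)).
  { apply expsum_antitone; [auto|..|lra].
    intros i Hi. specialize (Hk i Hi). specialize (Hr' i Hi). nra. }
  assert (0 < exp (- ((3 * kappa - 1) * Kc) - 3 * kappa * C * Kc ^ 2)) by apply exp_pos.
  assert (eps / 2 * exp (- ((3 * kappa - 1) * Kc) - 3 * kappa * C * Kc ^ 2)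
          <= exp (- ((3 * kappa - 1) * Kc) - 3 * kappa * C * Kc ^ 2 / T)
             * sumN N (fun i => w i * exp (- T * r' i) * indic_le (Kc / T) (r' i))).
  { rewrite Rmult_comm. apply Rmult_le_compat; lra. }
  lra.
Qed.

End RateComparison.

Definition expsum_cutoff (N : nat -> nat) (w r : nat -> nat -> R) : Prop :=
  exists tn : nat -> R, (forall n, 0 < tn n) /\ forall a, 0 < a < 1 ->
    Un_cv (fun n => expsum (N n) (w n) (r n) ((1 + a) * tn n)) 0 /\
    cv_infty (fun n => expsum (N n) (w n) (r n) ((1 - a) * tn n)).

(* Only specified for levels in [(0, sumN (N n) (w n))], where it is unique. *)
Definition hitting_time (N : nat -> nat) (w r : nat -> nat -> R) (eps : R) (n : nat) : R :=
  epsilon (inhabits 1) (fun T => 0 < T /\ expsum (N n) (w n) (r n) T = eps).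

Definition hitting_diverges (N : nat -> nat) (w r : nat -> nat -> R) (es : R) : Prop :=
  forall M, exists n0, forall n, (n0 <= n)%nat ->
    forall t, expsum (N n) (w n) (r n) t <= es -> M < t.

Lemma expsum_cutoff_eventually N w r (tn : nat -> R) n0 :
  (forall n, (n0 <= n)%nat -> 0 < tn n) ->
  (forall a, 0 < a < 1 ->
    Un_cv (fun n => expsum (N n) (w n) (r n) ((1 + a) * tn n)) 0 /\
    cv_infty (fun n => expsum (N n) (w n) (r n) ((1 - a) * tn n))) ->
  expsum_cutoff N w r.
Proof.
  intros Htn Hcut.
  exists (fun n => if le_lt_dec n0 n then tn n else 1). split.
  { intros n. destruct (le_lt_dec n0 n); [auto | lra]. }
  intros a Ha. destruct (Hcut a Ha) as [Hup Hlow]. split.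
  - intros eps He. destruct (Hup eps He) as [m Hm]. exists (Nat.max m n0). intros n Hn.
    destruct (le_lt_dec n0 n); [apply Hm; lia | lia].
  - intros M. destruct (Hlow M) as [m Hm]. exists (Nat.max m n0). intros n Hn.
    destruct (le_lt_dec n0 n); [apply Hm; lia | lia].
Qed.

Section Family.
Variable N : nat -> nat.
Variables w r : nat -> nat -> R.
Hypothesis Hw : forall n i, (i < N n)%nat -> 0 <= w n i.
Hypothesis Hr : forall n i, (i < N n)%nat -> 0 < r n i.
Hypothesis Hsum : cv_infty (fun n => sumN (N n) (w n)).

Lemma hitting_time_spec eps n : 0 < eps < sumN (N n) (w n) ->
  0 < hitting_time N w r eps n /\ expsum (N n) (w n) (r n) (hitting_time N w r eps n) = eps.
Proof. intros H. unfold hitting_time. apply epsilon_spec, expsum_hits; auto. Qed.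

(* The tangent line of the convex function [expsum] at a hitting time controls it on both sides. *)
Lemma expsum_cutoff_of_slope eps1 : 0 < eps1 ->
  (forall eps, 0 < eps <= eps1 -> cv_infty (fun n =>
     hitting_time N w r eps n * expslope (N n) (w n) (r n) (hitting_time N w r eps n))) ->
  expsum_cutoff N w r.
Proof.
  intros He1 Hslope. set (T1 := hitting_time N w r eps1).
  destruct (Hsum eps1) as [n0 Hn0].
  assert (HT1 : forall n, (n0 <= n)%nat -> 0 < T1 n /\ expsum (N n) (w n) (r n) (T1 n) = eps1)
    by (intros n Hn; apply hitting_time_spec; split; [lra | apply Hn0; lia]).
  apply (expsum_cutoff_eventually N w r T1 n0); [intros n Hn; apply HT1, Hn|].
  intros a Ha. split.
  - intros eta Heta. set (eps := Rmin (eta / 2) (eps1 / 2)).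
    assert (eps <= eta / 2 /\ eps <= eps1 / 2) as [He2 He3] by (split; [apply Rmin_l | apply Rmin_r]).
    assert (Heps : 0 < eps) by (unfold eps; apply Rmin_pos; lra).
    destruct (Hslope eps ltac:(lra) (eps1 * (1 + a) / a)) as [n1 Hn1].
    exists (Nat.max n0 n1). intros n Hn. unfold R_dist. rewrite Rminus_0_r.
    destruct (HT1 n ltac:(lia)) as [_ HT1e].
    destruct (hitting_time_spec eps n) as [HTp HTe];
      [split; [lra | specialize (Hn0 n ltac:(lia)); lra]|].
    assert (Horder : hitting_time N w r eps n <= (1 + a) * T1 n).
    { apply (expsum_hitting_order (N n) (w n) (r n) (Hw n) (Hr n)); [lra | rewrite HTe; lra|].
      rewrite HT1e. assert (Hn1' := Hn1 n ltac:(lia)).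
      apply (Rmult_lt_compat_l (a / (1 + a))) in Hn1'; [|apply Rdiv_lt_0_compat; lra].
      replace (a / (1 + a) * (eps1 * (1 + a) / a)) with eps1 in Hn1' by (field; lra). lra. }
    assert (Hmono := expsum_antitone (N n) (w n) (r n) (Hw n) (Hr n) _ _ Horder).
    assert (Hnn := expsum_nonneg (N n) (w n) (r n) (Hw n) ((1 + a) * T1 n)).
    rewrite Rabs_right by lra. lra.
  - intros M. destruct (Hslope eps1 ltac:(lra) (M / a)) as [n1 Hn1].
    exists (Nat.max n0 n1). intros n Hn.
    destruct (HT1 n ltac:(lia)) as [HT1p HT1e].
    assert (Htan := expsum_tangent (N n) (w n) (r n) (Hw n) (T1 n) ((1 - a) * T1 n)).
    assert (Hn1' := Hn1 n ltac:(lia)). fold T1 in Hn1'.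
    apply (Rmult_lt_compat_l a) in Hn1'; [|lra].
    replace (a * (M / a)) with M in Hn1' by (field; lra). nra.
Qed.

End Family.

Section Transfer.
Variable N : nat -> nat.
Variables w r r' : nat -> nat -> R.
Hypothesis Hw : forall n i, (i < N n)%nat -> 0 <= w n i.
Hypothesis Hr' : forall n i, (i < N n)%nat -> 0 < r' n i.
Hypothesis Hsum : cv_infty (fun n => sumN (N n) (w n)).
Variables kappa C : R.
Hypothesis Hkappa : 1 <= kappa.
Hypothesis HC0 : 0 <= C.
Hypothesis Hk : forall n i, (i < N n)%nat -> r' n i <= kappa * r n i.
Hypothesis HC : forall n i, (i < N n)%nat -> r n i <= r' n i + C * r' n i ^ 2.
Variable es : R.
Hypothesis Hes : 0 < es.
Hypothesis Hdiv : hitting_diverges N w r' es.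

Theorem expsum_cutoff_transfer : expsum_cutoff N w r -> expsum_cutoff N w r'.
Proof.
  intros [tn [Htn Hcut]].
  apply (expsum_cutoff_of_slope N w r' Hw Hr' Hsum es Hes). intros eps Heps M.
  set (Kc := 2 * (Rabs M / eps + 1)).
  assert (HKc : Kc / 2 * eps = Rabs M + eps) by (unfold Kc; field; lra).
  assert (0 < Kc) by (unfold Kc; assert (0 <= Rabs M / eps) by (apply Rmult_le_pos;
    [apply Rabs_pos | left; apply Rinv_0_lt_compat; lra]); lra).
  set (cst := eps / 2 * exp (- ((3 * kappa - 1) * Kc) - 3 * kappa * C * Kc ^ 2)).
  assert (Hcst : 0 < cst) by (unfold cst; apply Rmult_lt_0_compat; [lra | apply exp_pos]).
  destruct (Hcut (1 / 2) ltac:(lra)) as [Hup Hlow].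
  destruct (Hup cst Hcst) as [n1 Hn1]. destruct (Hlow eps) as [n2 Hn2].
  destruct (Hdiv 1) as [n3 Hn3]. destruct (Hsum es) as [n4 Hn4].
  exists (Nat.max n1 (Nat.max n2 (Nat.max n3 n4))). intros n Hn.
  destruct (hitting_time_spec N w r' Hw Hr' eps n) as [HTp HTe];
    [split; [lra | specialize (Hn4 n ltac:(lia)); lra]|].
  set (T := hitting_time N w r' eps n) in *.
  assert (HT1 : 1 < T) by (apply (Hn3 n ltac:(lia)); lra).
  assert (Hlate := Hn1 n ltac:(lia)). unfold R_dist in Hlate. rewrite Rminus_0_r in Hlate.
  assert (Hearly := Hn2 n ltac:(lia)).
  replace ((1 + 1 / 2) * tn n) with (3 / 2 * tn n) in Hlate by field.
  replace ((1 - 1 / 2) * tn n) with (tn n / 2) in Hearly by field.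
  assert (Hbound := expslope_lower_bound (N n) (w n) (r n) (r' n) (Hw n) (Hr' n) C HC0 (HC n)
     kappa Hkappa (Hk n) eps Kc (tn n) T ltac:(lra) ltac:(lra) (Htn n) ltac:(lra) HTe Hearly
     ltac:(eapply Rle_lt_trans; [apply Rle_abs | exact Hlate])).
  assert (M <= Rabs M) by apply Rle_abs. lra.
Qed.

End Transfer.

Definition comparable_rates (b : R) (q r : nat -> R) (i : nat) : Prop :=
  0 < r i /\ r i <= q i /\ q i <= 1 / b * r i /\ q i <= r i + 1 / (2 * b) * r i ^ 2.

Theorem expsum_cutoff_iff N (w q r : nat -> nat -> R) b es :
  (forall n i, (i < N n)%nat -> 0 <= w n i) -> 0 < b <= 1 ->
  (forall n i, (i < N n)%nat -> comparable_rates b (q n) (r n) i) ->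
  cv_infty (fun n => sumN (N n) (w n)) -> 0 < es ->
  hitting_diverges N w q es -> hitting_diverges N w r es ->
  expsum_cutoff N w q <-> expsum_cutoff N w r.
Proof.
  intros Hw Hb Hrates Hsum Hes Hdq Hdr.
  assert (Hr : forall n i, (i < N n)%nat -> 0 < r n i) by apply Hrates.
  assert (Hq : forall n i, (i < N n)%nat -> 0 < q n i) by (intros n i Hi; destruct (Hrates n i Hi); lra).
  assert (Hkb : 1 <= 1 / b) by (apply (Rmult_le_reg_l b); [lra | field_simplify; lra]).
  split; intros H.
  - apply (expsum_cutoff_transfer N w q r Hw Hr Hsum 1 (1 / (2 * b)) ltac:(lra)
      ltac:(apply Rmult_le_pos; [lra | left; apply Rinv_0_lt_compat; lra])
      ltac:(intros n i Hi; rewrite Rmult_1_l; apply Hrates; auto) ltac:(apply Hrates) es Hes Hdr H).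
  - apply (expsum_cutoff_transfer N w r q Hw Hq Hsum (1 / b) 0 Hkb ltac:(lra) ltac:(apply Hrates)
      ltac:(intros n i Hi; rewrite Rmult_0_l, Rplus_0_r; apply Hrates; auto) es Hes Hdq H).
Qed.

Lemma expsum_level_time_pos N (w r : nat -> nat -> R) es :
  (forall n i, (i < N n)%nat -> 0 <= w n i) -> (forall n i, (i < N n)%nat -> 0 < r n i) ->
  cv_infty (fun n => sumN (N n) (w n)) ->
  exists n0, forall n, (n0 <= n)%nat -> forall t, expsum (N n) (w n) (r n) t <= es -> 0 < t.
Proof.
  intros Hw Hr Hs. destruct (Hs es) as [n0 Hn0]. exists n0. intros n Hn t Ht.
  apply Rnot_le_lt. intros Hle.
  assert (H := expsum_antitone (N n) (w n) (r n) (Hw n) (Hr n) t 0 Hle).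
  rewrite expsum_0 in H. specialize (Hn0 n Hn). lra.
Qed.

Lemma hitting_diverges_rate_dominated N (w r r' : nat -> nat -> R) kappa es :
  (forall n i, (i < N n)%nat -> 0 <= w n i) -> (forall n i, (i < N n)%nat -> 0 < r' n i) ->
  cv_infty (fun n => sumN (N n) (w n)) -> 0 < kappa ->
  (forall n i, (i < N n)%nat -> r' n i <= kappa * r n i) ->
  hitting_diverges N w r es -> hitting_diverges N w r' es.
Proof.
  intros Hw Hr' Hs Hk Hrr' Hdiv M.
  destruct (Hdiv (kappa * M)) as [n0 Hn0].
  destruct (expsum_level_time_pos N w r' es Hw Hr' Hs) as [n1 Hn1].
  exists (Nat.max n0 n1). intros n Hn t Ht.
  assert (Htp := Hn1 n ltac:(lia) t Ht).
  assert (H := expsum_rate_dominated (N n) (w n) (r n) (r' n) kappa (kappa * t)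
                 (Hw n) (Hrr' n) Hk ltac:(nra)).
  replace (kappa * t / kappa) with t in H by (field; lra).
  assert (kappa * M < kappa * t) by (apply (Hn0 n ltac:(lia)); lra).
  nra.
Qed.

Lemma nfloor_spec x : 0 <= x -> x - 1 < INR (nfloor x) <= x.
Proof.
  intros Hx. unfold nfloor. destruct (base_Int_part x) as [H1 H2].
  assert (Hz : (0 <= Int_part x)%Z) by (assert (-1 < Int_part x)%Z by (apply lt_IZR; lra); lia).
  rewrite INR_IZR_INZ, Z2Nat.id by auto. lra.
Qed.

Lemma nceil_spec x : 0 <= x -> x <= INR (nceil x) < x + 1.
Proof.
  intros Hx. unfold nceil. destruct (base_Int_part (- x)) as [H1 H2].
  assert (Hz : (0 <= - Int_part (- x))%Z) by (assert (Int_part (- x) < 1)%Z by (apply lt_IZR; lra); lia).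
  rewrite INR_IZR_INZ, Z2Nat.id, opp_IZR by auto. lra.
Qed.

Lemma Un_cv0_sq (u : nat -> R) : (forall n, 0 <= u n) -> (Un_cv u 0 <-> Un_cv (fun n => u n ^ 2) 0).
Proof.
  intros Hu. split; intros H eps He.
  - destruct (H (Rmin 1 eps)) as [n0 Hn0]; [apply Rmin_pos; lra|]. exists n0. intros n Hn.
    specialize (Hn0 n Hn). specialize (Hu n). unfold R_dist in *. rewrite Rminus_0_r in *.
    rewrite Rabs_right in * by (apply Rle_ge; try apply pow2_ge_0; auto).
    assert (Rmin 1 eps <= 1) by apply Rmin_l. assert (Rmin 1 eps <= eps) by apply Rmin_r. simpl. nra.
  - destruct (H (eps ^ 2)) as [n0 Hn0]; [apply pow_lt; lra|]. exists n0. intros n Hn.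
    specialize (Hn0 n Hn). specialize (Hu n). unfold R_dist in *. rewrite Rminus_0_r in *.
    rewrite Rabs_right in * by (apply Rle_ge; try apply pow2_ge_0; auto).
    apply Rnot_le_lt. intros Hl. assert (eps ^ 2 <= u n ^ 2) by (apply pow_incr; lra). lra.
Qed.

Lemma cv_infty_sq (u : nat -> R) : (forall n, 0 <= u n) -> (cv_infty u <-> cv_infty (fun n => u n ^ 2)).
Proof.
  intros Hu. split; intros H M.
  - destruct (H (Rmax M 1)) as [n0 Hn0]. exists n0. intros n Hn. specialize (Hn0 n Hn).
    assert (M <= Rmax M 1) by apply Rmax_l. assert (1 <= Rmax M 1) by apply Rmax_r. simpl. nra.
  - destruct (H (M ^ 2)) as [n0 Hn0]. exists n0. intros n Hn. specialize (Hn0 n Hn). specialize (Hu n).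
    apply Rnot_le_lt. intros Hl. destruct (Rle_dec 0 M); [|lra].
    assert (u n ^ 2 <= M ^ 2) by (apply pow_incr; lra). lra.
Qed.

Lemma Un_cv0_le (u v : nat -> R) :
  (exists n0, forall n, (n0 <= n)%nat -> 0 <= u n <= v n) -> Un_cv v 0 -> Un_cv u 0.
Proof.
  intros [n0 Hn0] Hv eps He. destruct (Hv eps He) as [n1 Hn1]. exists (Nat.max n0 n1). intros n Hn.
  specialize (Hn0 n ltac:(lia)). specialize (Hn1 n ltac:(lia)). unfold R_dist in *.
  rewrite Rminus_0_r in *. rewrite Rabs_right in * by lra. lra.
Qed.

Lemma cv_infty_le (u v : nat -> R) :
  (exists n0, forall n, (n0 <= n)%nat -> v n <= u n) -> cv_infty v -> cv_infty u.
Proof.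
  intros [n0 Hn0] Hv M. destruct (Hv M) as [n1 Hn1]. exists (Nat.max n0 n1). intros n Hn.
  specialize (Hn0 n ltac:(lia)). specialize (Hn1 n ltac:(lia)). lra.
Qed.

Lemma sq_le_sq a b : 0 <= a -> 0 < b -> (a <= b <-> a ^ 2 <= b ^ 2).
Proof.
  intros Ha Hb. split; intros H; [apply pow_incr; auto|].
  apply Rnot_lt_le. intros Hl. assert (b ^ 2 < a ^ 2) by (simpl; nra). lra.
Qed.

Section Conversion.
Variable N : nat -> nat.
Variable K : nat -> nat -> nat -> R.
Variables pi mu : nat -> nat -> R.
Variables W q r : nat -> nat -> R.
Hypothesis HW : forall n i, (i < N n)%nat -> 0 <= W n i.
Hypothesis Hq : forall n i, (i < N n)%nat -> 0 < q n i.
Hypothesis Hr : forall n i, (i < N n)%nat -> 0 < r n i.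
Hypothesis Hsum : cv_infty (fun n => sumN (N n) (W n)).
Hypothesis Hd2 : forall n m, Defs.d2 (N n) (K n) (pi n) (mu n) m ^ 2 = expsum (N n) (W n) (q n) (INR m).
Hypothesis Hd2c : forall n t, d2c (N n) (K n) (pi n) (mu n) t ^ 2 = expsum (N n) (W n) (r n) t.

Let d2n n m := Defs.d2 (N n) (K n) (pi n) (mu n) m.
Let d2cn n t := d2c (N n) (K n) (pi n) (mu n) t.

Lemma d2_nonneg n m : 0 <= d2n n m.
Proof. apply sqrt_pos. Qed.

Lemma d2c_nonneg n t : 0 <= d2cn n t.
Proof. apply sqrt_pos. Qed.

Lemma L2_cutoff_c_iff : L2_cutoff_c N K pi mu <-> expsum_cutoff N W r.
Proof.
  split; intros [tn [Htn H]]; exists tn; split; auto; intros a Ha; destruct (H a Ha) as [H1 H2];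
    assert (Hup := Un_cv0_sq _ (fun n => d2c_nonneg n ((1 + a) * tn n)));
    assert (Hlow := cv_infty_sq _ (fun n => d2c_nonneg n ((1 - a) * tn n))); split.
  - apply (Un_cv_ext (fun n => d2cn n ((1 + a) * tn n) ^ 2)); [intros; apply Hd2c | apply Hup, H1].
  - apply (cv_infty_le _ (fun n => d2cn n ((1 - a) * tn n) ^ 2)); [|apply Hlow, H2].
    exists 0%nat. intros n _. unfold d2cn. rewrite Hd2c. lra.
  - apply Hup. apply (Un_cv_ext (fun n => expsum (N n) (W n) (r n) ((1 + a) * tn n))); [|exact H1].
    intros. symmetry. apply Hd2c.
  - apply Hlow. apply (cv_infty_le _ (fun n => expsum (N n) (W n) (r n) ((1 - a) * tn n))); [|exact H2].
    exists 0%nat. intros n _. unfold d2cn. rewrite Hd2c. lra.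
Qed.

Lemma L2_cutoff_of_expsum_cutoff : expsum_cutoff N W q -> L2_cutoff N K pi mu.
Proof.
  intros [tn [Htn H]]. exists tn. split; auto. intros a Ha. destruct (H a Ha) as [H1 H2]. split.
  - apply (Un_cv0_sq (fun n => d2n n (nceil ((1 + a) * tn n)))); [intros; apply d2_nonneg|].
    eapply Un_cv0_le; [|exact H1]. exists 0%nat. intros n _. split; [apply pow2_ge_0|].
    unfold d2n. rewrite Hd2. apply expsum_antitone; auto.
    apply nceil_spec. specialize (Htn n). nra.
  - apply (cv_infty_sq (fun n => d2n n (nfloor ((1 - a) * tn n)))); [intros; apply d2_nonneg|].
    eapply cv_infty_le; [|exact H2]. exists 0%nat. intros n _.
    unfold d2n. rewrite Hd2. apply expsum_antitone; auto.
    apply nfloor_spec. specialize (Htn n). nra.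
Qed.

Lemma T2_le n m eps : d2n n m <= eps -> (T2 (N n) (K n) (pi n) (mu n) eps <= m)%nat.
Proof.
  intros Hm.
  destruct (Wf_nat.dec_inh_nat_subset_has_unique_least_element (fun k => d2n n k <= eps))
    as [m0 [[Hm0 Hm0l] _]]; [intros k; apply classic | exists m; auto|].
  unfold T2. apply (epsilon_spec (inhabits 0%nat) (fun m => d2n n m <= eps /\
    forall k, d2n n k <= eps -> (m <= k)%nat) (ex_intro _ m0 (conj Hm0 Hm0l))). auto.
Qed.

Lemma hitting_diverges_of_T2 eps0 : 0 < eps0 ->
  cv_infty (fun n => INR (T2 (N n) (K n) (pi n) (mu n) eps0)) -> hitting_diverges N W q (eps0 ^ 2).
Proof.
  intros He HT M. destruct (HT (M + 1)) as [n0 Hn0].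
  destruct (expsum_level_time_pos N W q (eps0 ^ 2) HW Hq Hsum) as [n1 Hn1].
  exists (Nat.max n0 n1). intros n Hn t Ht.
  assert (Hc := nceil_spec t ltac:(left; apply (Hn1 n ltac:(lia) t Ht))).
  assert (HTm : (T2 (N n) (K n) (pi n) (mu n) eps0 <= nceil t)%nat).
  { apply T2_le, (sq_le_sq _ _ (d2_nonneg _ _) He). unfold d2n. rewrite Hd2.
    eapply Rle_trans; [|exact Ht]. apply expsum_antitone; auto. lra. }
  apply le_INR in HTm. specialize (Hn0 n ltac:(lia)). lra.
Qed.

Lemma T2c_le n eps t : 0 < eps -> eps ^ 2 < sumN (N n) (W n) -> 0 <= t -> d2cn n t <= eps ->
  T2c (N n) (K n) (pi n) (mu n) eps <= t.
Proof.
  intros He Hs Ht Hdt.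
  assert (Hd : forall s, d2cn n s <= eps <-> expsum (N n) (W n) (r n) s <= eps ^ 2)
    by (intros s; unfold d2cn; rewrite <- Hd2c; apply sq_le_sq; [apply d2c_nonneg | auto]).
  destruct (expsum_hits (N n) (W n) (r n) (HW n) (Hr n) (eps ^ 2)) as [t0 [Ht0 Ht0e]];
    [split; [apply pow_lt |]; auto|].
  unfold T2c. apply (epsilon_spec (inhabits 0) (fun t' => 0 <= t' /\ d2cn n t' <= eps /\
    forall s, 0 <= s -> d2cn n s <= eps -> t' <= s)); auto.
  exists t0. split; [lra|]. split; [apply Hd; lra|].
  intros s Hs0 Hds. apply Hd in Hds. apply Rnot_lt_le. intros Hlt.
  assert (expsum (N n) (W n) (r n) t0 < expsum (N n) (W n) (r n) s)
    by (apply expsum_decreasing; auto; assert (0 < eps ^ 2) by (apply pow_lt; auto); lra).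
  lra.
Qed.

Lemma hitting_diverges_of_T2c eps0 : 0 < eps0 ->
  cv_infty (fun n => T2c (N n) (K n) (pi n) (mu n) eps0) -> hitting_diverges N W r (eps0 ^ 2).
Proof.
  intros He HT M. destruct (HT M) as [n0 Hn0].
  destruct (expsum_level_time_pos N W r (eps0 ^ 2) HW Hr Hsum) as [n1 Hn1].
  destruct (Hsum (eps0 ^ 2)) as [n2 Hn2].
  exists (Nat.max n0 (Nat.max n1 n2)). intros n Hn t Ht.
  assert (HTc : T2c (N n) (K n) (pi n) (mu n) eps0 <= t).
  { apply T2c_le; [auto | apply Hn2; lia | left; apply (Hn1 n ltac:(lia) t Ht)|].
    apply (sq_le_sq _ _ (d2c_nonneg _ _) He). unfold d2cn. rewrite Hd2c. auto. }
  specialize (Hn0 n ltac:(lia)). lra.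
Qed.

Variable es : R.
Hypothesis Hes : 0 < es.
Hypothesis Hdiv : hitting_diverges N W q es.

Lemma L2_cutoff_time_diverges (tn : nat -> R) : (forall n, 0 < tn n) ->
  Un_cv (fun n => d2n n (nceil ((1 + 1 / 2) * tn n))) 0 -> cv_infty tn.
Proof.
  intros Htn H1 M.
  apply (Un_cv0_sq (fun n => d2n n (nceil ((1 + 1 / 2) * tn n)))) in H1; [|intros; apply d2_nonneg].
  destruct (H1 es Hes) as [n1 Hn1]. destruct (Hdiv (3 / 2 * M + 1)) as [n2 Hn2].
  exists (Nat.max n1 n2). intros n Hn. specialize (Hn1 n ltac:(lia)). unfold R_dist in Hn1.
  rewrite Rminus_0_r, Rabs_right in Hn1 by (apply Rle_ge, pow2_ge_0).
  unfold d2n in Hn1. rewrite Hd2 in Hn1.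
  assert (Hc := nceil_spec ((1 + 1 / 2) * tn n) ltac:(specialize (Htn n); lra)).
  assert (3 / 2 * M + 1 < INR (nceil ((1 + 1 / 2) * tn n))) by (apply (Hn2 n ltac:(lia)); lra).
  lra.
Qed.

(* A cutoff at [tn -> oo] survives the rounding of [(1 +- a) tn] to integers. *)
Lemma expsum_cutoff_of_L2_cutoff : L2_cutoff N K pi mu -> expsum_cutoff N W q.
Proof.
  intros [tn [Htn H]]. exists tn. split; auto.
  assert (Hinf : cv_infty tn).
  { apply L2_cutoff_time_diverges; auto. apply (H (1 / 2)). lra. }
  intros a Ha. destruct (H (a / 2) ltac:(lra)) as [H1 H2].
  destruct (Hinf (2 / a)) as [n0 Hn0].
  assert (Hbig : forall n, (n0 <= n)%nat -> 1 < a / 2 * tn n).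
  { intros n Hn. specialize (Hn0 n Hn). apply (Rmult_lt_compat_l (a / 2)) in Hn0; [|lra].
    replace (a / 2 * (2 / a)) with 1 in Hn0 by (field; lra). lra. }
  split.
  - apply (Un_cv0_sq (fun n => d2n n (nceil ((1 + a / 2) * tn n)))) in H1; [|intros; apply d2_nonneg].
    eapply Un_cv0_le; [|exact H1]. exists n0. intros n Hn.
    split; [apply expsum_nonneg; auto|]. unfold d2n. rewrite Hd2. apply expsum_antitone; auto.
    assert (Hc := nceil_spec ((1 + a / 2) * tn n) ltac:(specialize (Htn n); nra)).
    specialize (Hbig n Hn). lra.
  - apply (cv_infty_sq (fun n => d2n n (nfloor ((1 - a / 2) * tn n)))) in H2; [|intros; apply d2_nonneg].
    eapply cv_infty_le; [|exact H2]. exists n0. intros n Hn.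
    unfold d2n. rewrite Hd2. apply expsum_antitone; auto.
    assert (Hc := nfloor_spec ((1 - a / 2) * tn n) ltac:(specialize (Htn n); nra)).
    specialize (Hbig n Hn). lra.
Qed.

Lemma L2_cutoff_iff : L2_cutoff N K pi mu <-> expsum_cutoff N W q.
Proof. split; [apply expsum_cutoff_of_L2_cutoff | apply L2_cutoff_of_expsum_cutoff]. Qed.

End Conversion.

Definition eigenvector (N : nat) (B : nat -> nat -> R) (l : R) (v : nat -> R) : Prop :=
  forall y, (y < N)%nat -> sumN N (fun x => B y x * v x) = l * v y.

(* Spectral expansion of the row vector [z] along a symmetric [B] with spectrum [lam]: if
   [B = P^* diag(lam) P] with [P] unitary and [c = z P^*], then [a i y + i b i y = c_i P_iy]
   and [w i = |c_i|^2]. *)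
Definition spectral_expansion (N : nat) (B : nat -> nat -> R) (lam z : nat -> R) : Prop :=
  exists (w : nat -> R) (a b : nat -> nat -> R),
  (forall i, (i < N)%nat -> 0 <= w i /\
     (0 < w i -> exists v, eigenvector N B (lam i) v /\ sumN N (fun x => z x * v x) <> 0)) /\
  (forall k y, (y < N)%nat ->
     sumN N (fun x => z x * Kpow N B k x y) = sumN N (fun i => a i y * lam i ^ k) /\
     sumN N (fun i => b i y * lam i ^ k) = 0) /\
  (forall d : nat -> R, sumN N (fun y => sumN N (fun i => a i y * d i) ^ 2
                                          + sumN N (fun i => b i y * d i) ^ 2)
                        = sumN N (fun i => w i * d i ^ 2)).

From mathcomp Require all_boot all_algebra complex Rstruct ring.
Module SymmetricSpectral.
Import all_boot all_algebra complex Rstruct ring.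
Import GRing.Theory Num.Theory.
Local Open Scope ring_scope.
Local Open Scope complex_scope.
Local Open Scope sesquilinear_scope.

Local Notation ReC := (@complex.Re R).
Local Notation ImC := (@complex.Im R).

Lemma conjC_real (r : R) : ((r%:C)^*)%R = r%:C :> R[i].
Proof. by congr Complex; rewrite /= oppr0. Qed.

Lemma sumN_big N (h : nat -> R) : sumN N h = \sum_(i < N) h i.
Proof. by elim: N => [|N IH] /=; rewrite ?big_ord0 // big_ord_recr /= IH. Qed.

Lemma Re_sum m (h : 'I_m -> R[i]) : ReC (\sum_(i < m) h i) = \sum_(i < m) ReC (h i).
Proof.
elim: m h => [|m IH] h; rewrite ?big_ord0 // !big_ord_recr -IH.
by case: (\sum_(i < m) _) => a b; case: (h _).
Qed.

Lemma Im_sum m (h : 'I_m -> R[i]) : ImC (\sum_(i < m) h i) = \sum_(i < m) ImC (h i).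
Proof.
elim: m h => [|m IH] h; rewrite ?big_ord0 // !big_ord_recr -IH.
by case: (\sum_(i < m) _) => a b; case: (h _).
Qed.

Lemma Re_real (r : R) : ReC r%:C = r. Proof. by []. Qed.
Lemma Im_real (r : R) : ImC r%:C = 0. Proof. by []. Qed.

Lemma Re_mul_real (u : R[i]) (r : R) : ReC (u * r%:C) = ReC u * r.
Proof. by case: u => p q; rewrite -complexr0 /=; ring. Qed.

Lemma Im_mul_real (u : R[i]) (r : R) : ImC (u * r%:C) = ImC u * r.
Proof. by case: u => p q; rewrite -complexr0 /=; ring. Qed.

Lemma Re_conj (u : R[i]) : ReC u^* = ReC u.
Proof. by case: u. Qed.

Lemma Im_conj (u : R[i]) : ImC u^* = - ImC u.
Proof. by case: u. Qed.

Lemma Re_normsq (u : R[i]) : ReC (u * u^*) = ReC u ^+ 2 + ImC u ^+ 2.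
Proof. by case: u => p q /=; ring. Qed.

Section Spectral.
Variable n : nat.
Variable B : nat -> nat -> R.
Hypothesis Bsym : forall x y, (x < n.+1)%N -> (y < n.+1)%N -> B x y = B y x.

Let Bm : 'M[R[i]]_n.+1 := \matrix_(x, y) (B x y)%:C.
Let P := spectralmx Bm.
Let D := spectral_diag Bm.

Lemma Bm_herm : Bm \is hermsymmx.
Proof.
apply/is_hermitianmxP; rewrite expr0 scale1r; apply/matrixP => x y.
by rewrite !mxE conjC_real Bsym.
Qed.

Lemma PPt : P *m P^t* = 1%:M.
Proof. exact/unitarymxP/spectral_unitarymx. Qed.

Lemma PtP : P^t* *m P = 1%:M.
Proof. by rewrite -[P^t*]mul1mx mulmxKtV //; exact: spectral_unitarymx. Qed.

Lemma Bm_spectral : Bm = P^t* *m diag_mx D *m P.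
Proof.
rewrite -invmx_unitary; last exact: spectral_unitarymx.
by apply/orthomx_spectralP; apply: hermitian_normalmx; apply: Bm_herm.
Qed.

Lemma D_real i : D 0 i = (ReC (D 0 i))%:C.
Proof. by have /mxOverP /(_ 0 i) /RRe_real := hermitian_spectral_diag_real Bm_herm. Qed.

Lemma Bm_exp k : Bm ^+ k = P^t* *m diag_mx (\row_i D 0 i ^+ k) *m P.
Proof.
elim: k => [|k IH].
  have -> : \row_i D 0 i ^+ 0 = const_mx 1 by apply/matrixP => i j; rewrite !mxE expr0.
  by rewrite expr0 diag_const_mx mulmx1 PtP.
rewrite exprSr IH {1}Bm_spectral -mulmxE -!mulmxA [P *m (P^t* *m _)]mulmxA PPt mul1mx.
congr (_ *m _); rewrite mulmxA; congr (_ *m _); apply/matrixP => i j.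
rewrite mul_diag_mx !mxE; case: (eqVneq i j) => [->|]; rewrite ?mulr1n ?mulr0n ?mulr0 //.
by rewrite exprSr.
Qed.

Lemma Bm_exp_Kpow k (x y : 'I_n.+1) : (Bm ^+ k) x y = (Kpow n.+1 B k x y)%:C.
Proof.
elim: k x y => [|k IH] x y.
  rewrite expr0 mxE /=; case: (eqVneq x y) => [->|Hne]; first by rewrite Nat.eqb_refl.
  by have -> : Nat.eqb x y = false by apply/Nat.eqb_neq => /val_inj/eqP; rewrite (negbTE Hne).
rewrite exprSr -mulmxE mxE.
change (Kpow n.+1 B k.+1 x y) with (sumN n.+1 (fun j => Kpow n.+1 B k x j * B j y)).
rewrite sumN_big rmorph_sum; apply: eq_bigr => j _.
by rewrite IH !mxE rmorphM.
Qed.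

Lemma P_eigen : P *m Bm = diag_mx D *m P.
Proof. by rewrite {1}Bm_spectral !mulmxA PPt mul1mx. Qed.

Lemma P_eigen_row (i y : 'I_n.+1) :
  \sum_x P i x * (B y x)%:C = D 0 i * P i y.
Proof.
have /matrixP /(_ i y) := P_eigen; rewrite mul_diag_mx !mxE => <-.
by apply: eq_bigr => x _; rewrite !mxE Bsym.
Qed.

Variable z : nat -> R.
Let c : 'rV[R[i]]_n.+1 := (\row_x (z x)%:C) *m P^t*.

Lemma z_Bm_exp k (y : 'I_n.+1) :
  (sumN n.+1 (fun x => z x * Kpow n.+1 B k x y))%:C = \sum_i c 0 i * D 0 i ^+ k * P i y.
Proof.
have -> : (sumN n.+1 (fun x => z x * Kpow n.+1 B k x y))%:C
          = ((\row_x (z x)%:C) *m Bm ^+ k) 0 y.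
  rewrite mxE sumN_big rmorph_sum; apply: eq_bigr => x _.
  by rewrite !mxE Bm_exp_Kpow rmorphM.
rewrite Bm_exp !mulmxA mxE; apply: eq_bigr => i _.
by rewrite mul_mx_diag !mxE.
Qed.

Definition spec_lam (i : nat) : R := ReC (D 0 (inord i)).
Definition spec_w (i : nat) : R := ReC (c 0 (inord i)) ^+ 2 + ImC (c 0 (inord i)) ^+ 2.
Definition spec_a (i y : nat) : R := ReC (c 0 (inord i) * P (inord i) (inord y)).
Definition spec_b (i y : nat) : R := ImC (c 0 (inord i) * P (inord i) (inord y)).

Lemma spectral_coefficients k y : (y < n.+1)%N ->
  sumN n.+1 (fun x => z x * Kpow n.+1 B k x y) = sumN n.+1 (fun i => spec_a i y * pow (spec_lam i) k) /\
  sumN n.+1 (fun i => spec_b i y * pow (spec_lam i) k) = 0.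
Proof.
move=> Hy; have E := z_Bm_exp k (inord y); rewrite inordK // in E.
have Eterm (i : 'I_n.+1) : c 0 i * D 0 i ^+ k * P i (inord y)
                          = c 0 i * P i (inord y) * (spec_lam i ^+ k)%:C.
  by rewrite [in LHS]D_real /spec_lam inord_val rmorphXn mulrAC.
split.
- have := congr1 ReC E; rewrite Re_real => ->.
  rewrite Re_sum sumN_big; apply: eq_bigr => i _.
  by rewrite Eterm Re_mul_real /spec_a inord_val RpowE.
- have := congr1 ImC E; rewrite Im_real => E'.
  rewrite sumN_big.
  rewrite [in RHS]E' Im_sum; apply: eq_bigr => i _.
  by rewrite Eterm Im_mul_real /spec_b inord_val RpowE.
Qed.
Lemma spectral_parseval (d : nat -> R) :
  sumN n.+1 (fun y => pow (sumN n.+1 (fun i => spec_a i y * d i)) 2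
                      + pow (sumN n.+1 (fun i => spec_b i y * d i)) 2)
  = sumN n.+1 (fun i => spec_w i * pow (d i) 2).
Proof.
pose v : 'rV[R[i]]_n.+1 := \row_i (c 0 i * (d i)%:C).
pose u := v *m P.
have Hsq (r : 'rV[R[i]]_n.+1) : (r *m r^t*) 0 0 = \sum_y r 0 y * (r 0 y)^*.
  by rewrite mxE; apply: eq_bigr => y _; rewrite !mxE.
have Hnorm : \sum_y u 0 y * (u 0 y)^* = \sum_i v 0 i * (v 0 i)^*.
  by rewrite -!Hsq /u trmx_mul map_mxM !mulmxA -(mulmxA v) PPt mulmx1.
have Hu (y : 'I_n.+1) : u 0 y = \sum_i c 0 i * P i y * (d i)%:C.
  by rewrite mxE; apply: eq_bigr => i _; rewrite mxE mulrAC.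
rewrite !sumN_big.
transitivity (\sum_(y < n.+1) ReC (u 0 y * (u 0 y)^*)).
  apply: eq_bigr => y _; rewrite Re_normsq Hu Re_sum Im_sum !RpowE !sumN_big.
  by congr (_ ^+ 2 + _ ^+ 2); apply: eq_bigr => i _;
    rewrite ?Re_mul_real ?Im_mul_real /spec_a /spec_b !inord_val.
rewrite -Re_sum Hnorm Re_sum; apply: eq_bigr => i _.
rewrite Re_normsq mxE Re_mul_real Im_mul_real /spec_w inord_val RpowE.
rewrite RplusE; ring.
Qed.

Lemma spectral_eigenvector i : (i < n.+1)%N -> Rlt 0 (spec_w i) ->
  exists v, eigenvector n.+1 B (spec_lam i) v /\ sumN n.+1 (fun x => z x * v x) <> 0.
Proof.
move=> Hi Hw; set j : 'I_n.+1 := inord i.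
have Hrow (y : 'I_n.+1) := P_eigen_row j y.
have Hc : c 0 j = \sum_x (P j x)^* * (z x)%:C.
  by rewrite mxE; apply: eq_bigr => x _; rewrite !mxE mulrC.
have [Hre|Him] : ReC (c 0 j) <> 0 \/ ImC (c 0 j) <> 0.
  case: (eqVneq (ReC (c 0 j)) 0) => [Hr|]; last by move/eqP; left.
  right => Him; move: Hw; rewrite /spec_w -/j Hr Him !expr2 !mulr0 RplusE addr0.
  exact: Rlt_irrefl.
- exists (fun x => ReC (P j (inord x))); split.
  + move=> y /ltP Hy; rewrite /spec_lam -/j RmultE mulrC.
    have := congr1 ReC (Hrow (inord y)).
    rewrite Re_sum D_real [_%:C * _]mulrC Re_mul_real => <-; rewrite sumN_big.
    by apply: eq_bigr => x _; rewrite Re_mul_real inord_val inordK // mulrC.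
  + rewrite sumN_big; move: Hre; rewrite Hc Re_sum; congr (_ <> _); apply: eq_bigr => x _.
    by rewrite Re_mul_real Re_conj inord_val mulrC.
- exists (fun x => ImC (P j (inord x))); split.
  + move=> y /ltP Hy; rewrite /spec_lam -/j RmultE mulrC.
    have := congr1 ImC (Hrow (inord y)).
    rewrite Im_sum D_real [_%:C * _]mulrC Im_mul_real => <-; rewrite sumN_big.
    by apply: eq_bigr => x _; rewrite Im_mul_real inord_val inordK // mulrC.
  + rewrite sumN_big => Hz; apply: Him.
    transitivity (- \sum_(x < n.+1) z x * ImC (P j (inord x))); last by rewrite Hz oppr0.
    rewrite Hc Im_sum -sumrN; apply: eq_bigr => x _.
    by rewrite Im_mul_real Im_conj inord_val mulrC mulrN.
Qed.

End Spectral.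

Theorem symmetric_spectral_expansion N (B : nat -> nat -> R) :
  (forall x y, (x < N)%coq_nat -> (y < N)%coq_nat -> B x y = B y x) ->
  exists lam, forall z, spectral_expansion N B lam z.
Proof.
case: N => [|n] Hsym.
  exists (fun=> 0) => z; exists (fun=> 0), (fun _ _ => 0), (fun _ _ => 0).
  by split; [move=> i /ltP | split].
have Bsym x y : (x < n.+1)%N -> (y < n.+1)%N -> B x y = B y x.
  by move=> /ltP Hx /ltP Hy; exact: Hsym.
exists (spec_lam n B) => z; exists (spec_w n B z), (spec_a n B z), (spec_b n B z).
split; last split.
- move=> i /ltP Hi; split; last exact: spectral_eigenvector.
  rewrite /spec_w RplusE; apply/RleP; exact: addr_ge0 (sqr_ge0 _) (sqr_ge0 _).
- by move=> k y /ltP Hy; exact: spectral_coefficients.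
- exact: spectral_parseval.
Qed.

End SymmetricSpectral.

Lemma Un_cv_const (l : R) : Un_cv (fun _ => l) l.
Proof. intros eps He. exists 0%nat. intros. unfold R_dist. rewrite Rminus_diag, Rabs_R0. auto. Qed.

Lemma exp_series t l :
  Un_cv (fun m => sum_f_R0 (fun k => t ^ k / INR (fact k) * l ^ k) m) (exp (t * l)).
Proof.
  apply (Un_cv_ext (E1 (t * l))); [|apply E1_cvg].
  intros m. apply sum_eq. intros i _. rewrite Rpow_mult_distr. unfold Rdiv. ring.
Qed.

Lemma series_sumN N (c : nat -> R) (a : nat -> nat -> R) (l : nat -> R) :
  (forall x, (x < N)%nat -> Un_cv (fun m => sum_f_R0 (a x) m) (l x)) ->
  Un_cv (fun m => sum_f_R0 (fun k => sumN N (fun x => c x * a x k)) m) (sumN N (fun x => c x * l x)).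
Proof.
  induction N; intros Ha; simpl.
  - apply (Un_cv_ext (fun _ => 0)); [|apply Un_cv_const].
    intros m. induction m; simpl; [ring | rewrite <- IHm; ring].
  - apply (Un_cv_ext (fun m => sum_f_R0 (fun k => sumN N (fun x => c x * a x k)) m
                                + c N * sum_f_R0 (a N) m)).
    + intros m. rewrite scal_sum, <- plus_sum. apply sum_eq. intros; ring.
    + apply CV_plus; [apply IHN; intros; apply Ha; lia|].
      apply CV_mult; [apply Un_cv_const | apply Ha; lia].
Qed.

Lemma exp_series_sumN t N (c l : nat -> R) :
  Un_cv (fun m => sum_f_R0 (fun k => t ^ k / INR (fact k) * sumN N (fun i => c i * l i ^ k)) m)
        (sumN N (fun i => c i * exp (t * l i))).
Proof.
  eapply Un_cv_ext; [|apply (series_sumN N c (fun i k => t ^ k / INR (fact k) * l i ^ k))].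
  - intros m. apply sum_eq. intros k _. rewrite sumN_scal_l. apply sumN_ext. intros; ring.
  - intros i _. apply exp_series.
Qed.

Lemma series_val_eq (a : nat -> R) l : Un_cv (fun m => sum_f_R0 a m) l -> series_val a = l.
Proof.
  intros H. unfold series_val.
  assert (Hs := epsilon_spec (inhabits 0) (fun l => Un_cv (fun m => sum_f_R0 a m) l) (ex_intro _ l H)).
  eapply UL_sequence; eauto.
Qed.

Section Chain.
Variable N : nat.
Variable K : nat -> nat -> R.
Variable pi : nat -> R.
Hypothesis HK : is_markov_kernel N K.
Hypothesis Hpipos : forall x, (x < N)%nat -> 0 < pi x.
Hypothesis Hrev : reversible N K pi.

Let spi x := sqrt (pi x).

(* [Ksym = D^(1/2) K D^(-1/2)] with [D = diag pi]; reversibility makes it symmetric. *)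
Definition Ksym (x y : nat) : R := sqrt (pi x) * K x y / sqrt (pi y).

Lemma spi_pos x : (x < N)%nat -> 0 < spi x.
Proof. intros. apply sqrt_lt_R0. auto. Qed.

Lemma spi_sq x : (x < N)%nat -> spi x * spi x = pi x.
Proof. intros. apply sqrt_sqrt. left; auto. Qed.

Lemma Kpow_Ksym k x y : (x < N)%nat -> (y < N)%nat ->
  Kpow N Ksym k x y = spi x * Kpow N K k x y / spi y.
Proof.
  assert (Hs := spi_pos). revert y. induction k; intros y Hx Hy; simpl.
  - destruct (Nat.eqb_spec x y); [subst; field | unfold Rdiv; ring].
    apply Rgt_not_eq, Hs; auto.
  - rewrite (sumN_ext N _ (fun v => (spi x / spi y) * (Kpow N K k x v * K v y))).
    + rewrite <- sumN_scal_l. field. apply Rgt_not_eq, Hs; auto.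
    + intros v Hv. rewrite IHk by auto. unfold Ksym. fold (spi v) (spi y). field.
      split; apply Rgt_not_eq, Hs; auto.
Qed.

Lemma Ksym_sym x y : (x < N)%nat -> (y < N)%nat -> Ksym x y = Ksym y x.
Proof.
  intros Hx Hy. unfold Ksym. fold (spi x) (spi y).
  assert (Hr := Hrev x y Hx Hy). rewrite <- (spi_sq x Hx), <- (spi_sq y Hy) in Hr.
  assert (0 < spi x) by (apply spi_pos; auto). assert (0 < spi y) by (apply spi_pos; auto).
  apply (Rmult_eq_reg_r (spi x * spi y)); [|nra].
  replace (spi x * K x y / spi y * (spi x * spi y)) with (spi x * spi x * K x y) by (field; lra).
  replace (spi y * K y x / spi x * (spi x * spi y)) with (spi y * spi y * K y x) by (field; lra).
  lra.
Qed.

Lemma K_nonneg x y : (x < N)%nat -> (y < N)%nat -> 0 <= K x y.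
Proof. intros Hx Hy. destruct (HK x Hx) as [H _]. auto. Qed.

Lemma K_rowsum x : (x < N)%nat -> sumN N (K x) = 1.
Proof. intros Hx. destruct (HK x Hx) as [_ H]. auto. Qed.

Lemma Kpow_succ_l k x y : (x < N)%nat -> (y < N)%nat ->
  Kpow N K (S k) x y = sumN N (fun v => K x v * Kpow N K k v y).
Proof.
  revert x y. induction k; intros x y Hx Hy.
  - simpl. rewrite (sumN_ext N _ (fun v => if Nat.eqb x v then K v y else 0)),
      (sumN_ext N (fun v => K x v * _) (fun v => if Nat.eqb v y then K x v else 0)).
    + rewrite sumN_delta, sumN_delta_r; auto.
    + intros v _. destruct (Nat.eqb_spec v y); [subst; ring | ring].
    + intros v _. destruct (Nat.eqb_spec x v); [subst; ring | ring].
  - change (Kpow N K (S (S k)) x y) with (sumN N (fun v => Kpow N K (S k) x v * K v y)).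
    rewrite (sumN_ext N _ (fun v => sumN N (fun u => K x u * Kpow N K k u v * K v y))).
    + rewrite sumN_exchange. apply sumN_ext. intros u Hu. simpl.
      rewrite sumN_scal_l. apply sumN_ext. intros; ring.
    + intros v Hv. rewrite IHk, sumN_scal_r by auto. apply sumN_ext. intros; ring.
Qed.

Lemma Kpow_nonneg k x y : (x < N)%nat -> (y < N)%nat -> 0 <= Kpow N K k x y.
Proof.
  revert y. induction k; intros y Hx Hy; simpl.
  - destruct (Nat.eqb x y); lra.
  - apply sumN_nonneg. intros v Hv. apply Rmult_le_pos; [apply IHk | apply K_nonneg]; auto.
Qed.

Lemma Kpow_rowsum k x : (x < N)%nat -> sumN N (fun y => Kpow N K k x y) = 1.
Proof.
  revert x. induction k; intros x Hx; simpl.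
  - apply (sumN_delta N x (fun _ => 1)); auto.
  - rewrite sumN_exchange, <- (IHk x Hx). apply sumN_ext. intros v Hv.
    rewrite <- sumN_scal_l, K_rowsum by auto. ring.
Qed.

Lemma Kpow_stationary k y : (y < N)%nat -> sumN N (fun x => pi x * Kpow N K k x y) = pi y.
Proof.
  revert y. induction k; intros y Hy; simpl.
  - rewrite <- (sumN_delta_r N y pi Hy). apply sumN_ext. intros x _.
    destruct (Nat.eqb_spec x y); ring.
  - rewrite (sumN_ext N _ (fun x => sumN N (fun v => pi x * Kpow N K k x v * K v y))).
    + rewrite sumN_exchange, (sumN_ext N _ (fun v => pi y * K y v)).
      * rewrite <- sumN_scal_l, K_rowsum by auto. ring.
      * intros v Hv. rewrite <- sumN_scal_r, IHk by auto. apply Hrev; auto.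
    + intros x Hx. rewrite sumN_scal_l. apply sumN_ext. intros; ring.
Qed.

Lemma Kpow_eigenfunction (h : nat -> R) (l : R) :
  (forall x, (x < N)%nat -> sumN N (fun y => K x y * h y) = l * h x) ->
  forall k x, (x < N)%nat -> sumN N (fun y => Kpow N K k x y * h y) = l ^ k * h x.
Proof.
  intros He. induction k; intros x Hx.
  - simpl. rewrite <- (sumN_delta N x h Hx). rewrite Rmult_1_l.
    apply sumN_ext. intros y _. destruct (Nat.eqb x y); ring.
  - rewrite (sumN_ext N _ (fun y => sumN N (fun v => K x v * Kpow N K k v y * h y))).
    + rewrite sumN_exchange, (sumN_ext N _ (fun v => l ^ k * (K x v * h v))).
      * rewrite <- sumN_scal_l, He by auto. simpl. ring.
      * intros v Hv. replace (l ^ k * (K x v * h v)) with (K x v * (l ^ k * h v)) by ring.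
        rewrite <- IHk, sumN_scal_l by auto. apply sumN_ext. intros; ring.
    + intros y Hy. rewrite Kpow_succ_l, sumN_scal_r by auto. auto.
Qed.

(* Write [K x0 . = c delta_x0 + K'] with [K' >= 0] of mass [1 - c], at a maximiser [x0] of [|h|]. *)
Lemma eigenvalue_holding_bound (c l : R) (h : nat -> R) :
  (forall x, (x < N)%nat -> c <= K x x) ->
  (forall x, (x < N)%nat -> sumN N (fun y => K x y * h y) = l * h x) ->
  (exists x, (x < N)%nat /\ h x <> 0) -> Rabs (l - c) <= 1 - c.
Proof.
  intros Hc He [x1 [Hx1 Hh1]].
  destruct (sumN_argmax N (fun x => Rabs (h x))) as [x0 [Hx0 Hm]]; [lia|].
  set (M := Rabs (h x0)).
  assert (HM : 0 < M) by (specialize (Hm x1 Hx1); apply Rabs_pos_lt in Hh1; unfold M; lra).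
  set (K' := fun y => K x0 y - (if Nat.eqb x0 y then c else 0)).
  assert (HK' : forall y, (y < N)%nat -> 0 <= K' y).
  { intros y Hy. unfold K'. destruct (Nat.eqb_spec x0 y).
    - subst. specialize (Hc y Hy). lra.
    - rewrite Rminus_0_r. apply K_nonneg; auto. }
  assert (E : sumN N (fun y => K' y * h y) = (l - c) * h x0).
  { unfold K'. rewrite (sumN_ext N _ (fun y => K x0 y * h y - (if Nat.eqb x0 y then c * h y else 0))).
    - rewrite sumN_minus, He, sumN_delta by auto. ring.
    - intros y Hy. destruct (Nat.eqb x0 y); ring. }
  assert (E2 : Rabs ((l - c) * h x0) <= (1 - c) * M).
  { rewrite <- E. eapply Rle_trans; [apply sumN_abs|].
    apply Rle_trans with (sumN N (fun y => K' y * M)).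
    - apply sumN_le. intros y Hy. rewrite Rabs_mult, (Rabs_right (K' y)) by (apply Rle_ge, HK'; auto).
      apply Rmult_le_compat_l; [apply HK'; auto | apply Hm; auto].
    - rewrite <- sumN_scal_r. unfold K'.
      rewrite sumN_minus, K_rowsum, (sumN_delta N x0 (fun _ => c)) by auto.
      lra. }
  rewrite Rabs_mult in E2. fold M in E2.
  apply (Rmult_le_reg_r M); [exact HM|]. rewrite (Rmult_comm (Rabs _)). lra.
Qed.

Hypothesis Hirr : irreducible N K.

(* Maximum principle: [h] is maximal at [x0], and every state is reached from [x0]. *)
Lemma harmonic_constant (h : nat -> R) : (1 <= N)%nat ->
  (forall x, (x < N)%nat -> sumN N (fun y => K x y * h y) = h x) ->
  exists C, forall x, (x < N)%nat -> h x = C.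
Proof.
  intros HN He.
  destruct (sumN_argmax N h HN) as [x0 [Hx0 Hm]].
  exists (h x0). intros y Hy.
  destruct (Hirr x0 y Hx0 Hy) as [m Hpos].
  assert (Hk := Kpow_eigenfunction h 1 ltac:(intros; rewrite Rmult_1_l; auto) m x0 Hx0).
  rewrite pow1, Rmult_1_l in Hk.
  assert (Hs : sumN N (fun v => Kpow N K m x0 v * (h x0 - h v)) = 0).
  { rewrite (sumN_ext N _ (fun v => h x0 * Kpow N K m x0 v - Kpow N K m x0 v * h v)) by (intros; ring).
    rewrite sumN_minus, <- sumN_scal_l, Kpow_rowsum, Hk by auto. ring. }
  assert (Hnn : forall v, (v < N)%nat -> 0 <= Kpow N K m x0 v * (h x0 - h v)).
  { intros v Hv. apply Rmult_le_pos; [apply Kpow_nonneg; auto | specialize (Hm v Hv); lra]. }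
  assert (Hz := sumN_eq0_nonneg N _ Hnn Hs y Hy).
  apply Rmult_integral in Hz. destruct Hz; lra.
Qed.

Variable mu : nat -> R.
Variable c : R.
Hypothesis HN : (1 <= N)%nat.
Hypothesis Hpi : is_prob N pi.
Hypothesis Hmu : is_prob N mu.
Hypothesis Hcx : forall x, (x < N)%nat -> c <= K x x.

Let z x := (mu x - pi x) / spi x.

Lemma mu_Kpow_centered k y : (y < N)%nat ->
  sumN N (fun x => mu x * Kpow N K k x y) - pi y = spi y * sumN N (fun x => z x * Kpow N Ksym k x y).
Proof.
  intros Hy. rewrite <- (Kpow_stationary k y Hy) at 1.
  rewrite <- sumN_minus, sumN_scal_l. apply sumN_ext. intros x Hx.
  rewrite Kpow_Ksym by auto. unfold z.
  assert (0 < spi x) by (apply spi_pos; auto). assert (0 < spi y) by (apply spi_pos; auto).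
  field. lra.
Qed.

Lemma L2dist_centered (nu : nat -> R) :
  L2dist N pi nu ^ 2 = sumN N (fun y => ((nu y - pi y) / spi y) ^ 2).
Proof.
  unfold L2dist. rewrite pow2_sqrt.
  - apply sumN_ext. intros y Hy. rewrite <- (spi_sq y Hy).
    assert (0 < spi y) by (apply spi_pos; auto). field. lra.
  - apply sumN_nonneg. intros y Hy. apply Rmult_le_pos; [apply pow2_ge_0 | left; auto].
Qed.

(* A [Ksym]-eigenvector seen by [mu - pi] is an eigenfunction of [K] that is not constant,
   since [mu - pi] has total mass [0]. *)
Lemma eigenvalue_range (l : R) (v : nat -> R) :
  eigenvector N Ksym l v -> sumN N (fun x => z x * v x) <> 0 -> 2 * c - 1 <= l < 1.
Proof.
  intros He Hz. set (h := fun x => v x / spi x).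
  assert (Hv : forall x, (x < N)%nat -> v x = h x * spi x).
  { intros x Hx. unfold h. assert (0 < spi x) by (apply spi_pos; auto). field. lra. }
  assert (Kh : forall x, (x < N)%nat -> sumN N (fun y => K x y * h y) = l * h x).
  { intros x Hx. assert (0 < spi x) by (apply spi_pos; auto).
    apply (Rmult_eq_reg_l (spi x)); [|lra].
    rewrite sumN_scal_l. transitivity (l * v x).
    - rewrite <- He by auto. apply sumN_ext. intros y Hy. unfold h, Ksym.
      fold (spi x) (spi y). assert (0 < spi y) by (apply spi_pos; auto). field. lra.
    - rewrite Hv by auto. ring. }
  assert (Hne : exists x, (x < N)%nat /\ h x <> 0).
  { apply NNPP. intros Hn. apply Hz. apply sumN_eq0. intros x Hx.
    rewrite Hv by auto. destruct (Req_dec (h x) 0) as [E|E]; [rewrite E; ring|].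
    exfalso; apply Hn; exists x; auto. }
  assert (Hb := eigenvalue_holding_bound c l h Hcx Kh Hne).
  assert (Hl : 2 * c - 1 <= l <= 1) by (unfold Rabs in Hb; destruct (Rcase_abs (l - c)); lra).
  split; [lra|]. destruct (Rle_lt_or_eq_dec l 1) as [|E]; [lra | auto|]. exfalso. subst l.
  destruct (harmonic_constant h HN) as [C HC]; [intros x Hx; rewrite Kh by auto; ring|].
  apply Hz. rewrite (sumN_ext N _ (fun x => C * (mu x - pi x))).
  - rewrite <- sumN_scal_l, sumN_minus. destruct Hmu as [_ ->]. destruct Hpi as [_ ->]. ring.
  - intros x Hx. rewrite Hv, HC by auto. unfold z. assert (0 < spi x) by (apply spi_pos; auto).
    field. lra.
Qed.

Variable lam : nat -> R.
Hypothesis Hlam : forall v, spectral_expansion N Ksym lam v.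

Lemma Kpow_series_cv t x y : (x < N)%nat -> (y < N)%nat ->
  exists l, Un_cv (fun m => sum_f_R0 (fun k => t ^ k / INR (fact k) * Kpow N K k x y) m) l.
Proof.
  intros Hx Hy. destruct (Hlam (fun u => if Nat.eqb x u then 1 else 0)) as [w [a [b [_ [Hcoef _]]]]].
  exists (sumN N (fun i => spi y / spi x * a i y * exp (t * lam i))).
  eapply Un_cv_ext; [|apply exp_series_sumN]. intros m. apply sum_eq. intros k _. f_equal. symmetry.
  destruct (Hcoef k y Hy) as [Hk _].
  rewrite (sumN_ext N (fun u => _ * Kpow N Ksym k u y)
             (fun u => if Nat.eqb x u then Kpow N Ksym k u y else 0)),
    sumN_delta, Kpow_Ksym in Hk by (auto; intros u _; destruct (Nat.eqb x u); ring).
  assert (0 < spi x) by (apply spi_pos; auto). assert (0 < spi y) by (apply spi_pos; auto).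
  transitivity (spi y / spi x * (spi x * Kpow N K k x y / spi y)); [field; lra|].
  rewrite Hk, sumN_scal_l. apply sumN_ext. intros; ring.
Qed.

Lemma mu_Ht_limit t y L : (y < N)%nat ->
  Un_cv (fun m => sum_f_R0 (fun k =>
    t ^ k / INR (fact k) * sumN N (fun x => mu x * Kpow N K k x y)) m) L ->
  sumN N (fun x => mu x * Ht N K t x y) = exp (- t) * L.
Proof.
  intros Hy HL.
  destruct (choice (fun x l => (x < N)%nat ->
     Un_cv (fun m => sum_f_R0 (fun k => t ^ k / INR (fact k) * Kpow N K k x y) m) l)) as [l Hl].
  { intros x. destruct (lt_dec x N) as [Hx|Hx].
    - destruct (Kpow_series_cv t x y Hx Hy) as [l Hl]. exists l. auto.
    - exists 0. lia. }
  assert (HmuL : sumN N (fun x => mu x * l x) = L).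
  { eapply UL_sequence; [|exact HL]. eapply Un_cv_ext; [|apply (series_sumN N mu _ l Hl)].
    intros m. apply sum_eq. intros k _. rewrite sumN_scal_l. apply sumN_ext. intros; ring. }
  rewrite <- HmuL, sumN_scal_l. apply sumN_ext. intros x Hx.
  unfold Ht. rewrite (series_val_eq _ (l x) (Hl x Hx)). ring.
Qed.

Section Expansion.
Variable w : nat -> R.
Variables a b : nat -> nat -> R.
Hypothesis Hw : forall i, (i < N)%nat -> 0 <= w i /\
  (0 < w i -> exists v, eigenvector N Ksym (lam i) v /\ sumN N (fun x => z x * v x) <> 0).
Hypothesis Hcoef : forall k y, (y < N)%nat ->
  sumN N (fun x => z x * Kpow N Ksym k x y) = sumN N (fun i => a i y * lam i ^ k) /\
  sumN N (fun i => b i y * lam i ^ k) = 0.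
Hypothesis Hpars : forall d : nat -> R,
  sumN N (fun y => sumN N (fun i => a i y * d i) ^ 2 + sumN N (fun i => b i y * d i) ^ 2)
  = sumN N (fun i => w i * d i ^ 2).

Lemma d2_expansion m : Defs.d2 N K pi mu m ^ 2 = sumN N (fun i => w i * (lam i ^ m) ^ 2).
Proof.
  unfold Defs.d2. rewrite L2dist_centered, <- Hpars. apply sumN_ext. intros y Hy.
  destruct (Hcoef m y Hy) as [Ha Hb]. rewrite mu_Kpow_centered, Ha, Hb by auto.
  assert (0 < spi y) by (apply spi_pos; auto). field. lra.
Qed.

Lemma mu_Ht_expansion t y : (y < N)%nat ->
  sumN N (fun x => mu x * Ht N K t x y)
  = pi y + spi y * sumN N (fun i => a i y * exp (- t * (1 - lam i))).
Proof.
  intros Hy.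
  rewrite (mu_Ht_limit t y (pi y * exp t + sumN N (fun i => spi y * a i y * exp (t * lam i))) Hy).
  - assert (Et : exp (- t) * exp t = 1) by (rewrite <- exp_plus, Rplus_opp_l; apply exp_0).
    rewrite Rmult_plus_distr_l, sumN_scal_l, sumN_scal_l.
    replace (exp (- t) * (pi y * exp t)) with (pi y * (exp (- t) * exp t)) by ring.
    rewrite Et, Rmult_1_r. f_equal. apply sumN_ext. intros i _.
    replace (- t * (1 - lam i)) with (- t + t * lam i) by ring. rewrite exp_plus. ring.
  - apply (Un_cv_ext (fun m => pi y * sum_f_R0 (fun k => t ^ k / INR (fact k) * 1 ^ k) m
      + sum_f_R0 (fun k => t ^ k / INR (fact k) * sumN N (fun i => spi y * a i y * lam i ^ k)) m)).
    + intros m. rewrite scal_sum, <- plus_sum. apply sum_eq. intros k _.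
      replace (sumN N (fun x => mu x * Kpow N K k x y))
        with (pi y + (sumN N (fun x => mu x * Kpow N K k x y) - pi y)) by ring.
      rewrite mu_Kpow_centered, (proj1 (Hcoef k y Hy)), pow1, (sumN_scal_l N (spi y)) by auto.
      rewrite (sumN_ext N (fun i => spi y * (a i y * lam i ^ k)) (fun i => spi y * a i y * lam i ^ k))
        by (intros; ring).
      ring.
    + apply CV_plus; [apply CV_mult; [apply Un_cv_const|] | apply exp_series_sumN].
      replace (exp t) with (exp (t * 1)) by (rewrite Rmult_1_r; auto). apply exp_series.
Qed.

Lemma imaginary_part_vanishes t y : (y < N)%nat ->
  sumN N (fun i => b i y * exp (- t * (1 - lam i))) = 0.
Proof.
  intros Hy.
  assert (H0 : sumN N (fun i => b i y * exp (t * lam i)) = 0).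
  { eapply UL_sequence; [apply exp_series_sumN|].
    apply (Un_cv_ext (fun _ => 0)); [|apply Un_cv_const].
    intros m. symmetry. apply sum_eq_R0. intros k _. rewrite (proj2 (Hcoef k y Hy)). ring. }
  rewrite <- (Rmult_0_r (exp (- t))), <- H0, sumN_scal_l. apply sumN_ext. intros i _.
  replace (- t * (1 - lam i)) with (- t + t * lam i) by ring. rewrite exp_plus. ring.
Qed.

Lemma d2c_expansion t : d2c N K pi mu t ^ 2 = sumN N (fun i => w i * exp (- 2 * t * (1 - lam i))).
Proof.
  unfold d2c. rewrite L2dist_centered.
  rewrite (sumN_ext N (fun i => w i * _) (fun i => w i * exp (- t * (1 - lam i)) ^ 2)).
  - rewrite <- Hpars. apply sumN_ext. intros y Hy.
    rewrite imaginary_part_vanishes, mu_Ht_expansion by auto.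
    assert (0 < spi y) by (apply spi_pos; auto). field. lra.
  - intros i _. rewrite <- Rsqr_pow2, Rsqr_def, <- exp_plus. f_equal. f_equal. ring.
Qed.

Lemma weight_total : sumN N w = sumN N (fun y => mu y ^ 2 / pi y) - 1.
Proof.
  transitivity (Defs.d2 N K pi mu 0 ^ 2); [rewrite d2_expansion; apply sumN_ext; intros; simpl; ring|].
  unfold Defs.d2. rewrite L2dist_centered.
  rewrite (sumN_ext N _ (fun y => mu y ^ 2 / pi y - 2 * mu y + pi y)).
  - rewrite sumN_plus, sumN_minus, <- sumN_scal_l. destruct Hmu as [_ ->]. destruct Hpi as [_ ->]. ring.
  - intros y Hy. simpl Kpow.
    rewrite (sumN_ext N _ (fun x => if Nat.eqb x y then mu x else 0)),
      sumN_delta_r by (auto; intros x _; destruct (Nat.eqb x y); ring).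
    rewrite <- (spi_sq y Hy). assert (0 < spi y) by (apply spi_pos; auto). field. lra.
Qed.

Lemma weight_support i : (i < N)%nat -> 0 < w i -> 2 * c - 1 <= lam i < 1.
Proof.
  intros Hi Hwi. destruct (proj2 (Hw i Hi) Hwi) as [v [Hv Hz]].
  exact (eigenvalue_range (lam i) v Hv Hz).
Qed.

End Expansion.

Lemma chain_expansion : exists w : nat -> R,
  (forall i, (i < N)%nat -> 0 <= w i /\ (0 < w i -> 2 * c - 1 <= lam i < 1)) /\
  (forall m, Defs.d2 N K pi mu m ^ 2 = sumN N (fun i => w i * (lam i ^ m) ^ 2)) /\
  (forall t, d2c N K pi mu t ^ 2 = sumN N (fun i => w i * exp (- 2 * t * (1 - lam i)))) /\
  sumN N w = sumN N (fun y => mu y ^ 2 / pi y) - 1.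
Proof.
  destruct (Hlam z) as [w [a [b [Hw [Hcoef Hpars]]]]].
  exists w. split; [|split; [|split]].
  - intros i Hi. split; [apply Hw; auto | apply (weight_support w Hw i Hi)].
  - apply (d2_expansion w a b Hcoef Hpars).
  - apply (d2c_expansion w a b Hcoef Hpars).
  - apply (weight_total w a b Hcoef Hpars).
Qed.

End Chain.

Lemma log_rate_bounds (b l : R) : 0 < b -> b <= l < 1 ->
  0 < 2 * (1 - l) /\ 2 * (1 - l) <= - 2 * ln l /\ - 2 * ln l <= 1 / b * (2 * (1 - l)) /\
  - 2 * ln l <= 2 * (1 - l) + 1 / (2 * b) * (2 * (1 - l)) ^ 2.
Proof.
  intros Hb [Hl1 Hl2].
  assert (Hlow : ln l <= l - 1)
    by (rewrite <- (exp_ln l) at 2 by lra; pose proof (exp_ineq1_le (ln l)); lra).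
  assert (Hup : - ln l <= (1 - l) / l).
  { rewrite <- ln_Rinv by lra. replace ((1 - l) / l) with (/ l - 1) by (field; lra).
    rewrite <- (exp_ln (/ l)) at 2 by (apply Rinv_0_lt_compat; lra).
    pose proof (exp_ineq1_le (ln (/ l))). lra. }
  assert ((1 - l) / l = (1 - l) + (1 - l) ^ 2 / l) by (field; lra).
  assert ((1 - l) / l <= (1 - l) / b).
  { unfold Rdiv. apply Rmult_le_compat_l; [lra|]. apply Rinv_le_contravar; lra. }
  assert ((1 - l) ^ 2 / l <= (1 - l) ^ 2 / b).
  { unfold Rdiv. apply Rmult_le_compat_l; [apply pow2_ge_0|]. apply Rinv_le_contravar; lra. }
  replace (1 / b * (2 * (1 - l))) with (2 * ((1 - l) / b)) by (field; lra).
  replace (1 / (2 * b) * (2 * (1 - l)) ^ 2) with (2 * ((1 - l) ^ 2 / b)) by (field; lra).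
  repeat split; lra.
Qed.

(* The squared [L^2] distances of the discrete and the continuous chain are exponential sums
   with common weights [W] and rates [q i = - 2 ln lam i], resp. [r i = 2 (1 - lam i)]. *)
Definition expsum_representation (N : nat) (K : nat -> nat -> R) (pi mu : nat -> R) (b : R)
  (W q r : nat -> R) : Prop :=
  (forall i, (i < N)%nat -> 0 <= W i /\ comparable_rates b q r i) /\
  (forall m, Defs.d2 N K pi mu m ^ 2 = expsum N W q (INR m)) /\
  (forall t, d2c N K pi mu t ^ 2 = expsum N W r t) /\
  sumN N W = sumN N (fun y => mu y ^ 2 / pi y) - 1.

(* Eigenvalues of zero weight are moved to [b], which keeps all of them in [[b, 1)]. *)
Theorem chain_expsum_representation N K pi mu c b :
  (1 <= N)%nat -> is_markov_kernel N K -> irreducible N K ->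
  is_prob N pi -> (forall x, (x < N)%nat -> 0 < pi x) -> reversible N K pi -> is_prob N mu ->
  (forall x, (x < N)%nat -> c <= K x x) -> 0 < b <= 2 * c - 1 -> b < 1 ->
  exists W q r : nat -> R, expsum_representation N K pi mu b W q r.
Proof.
  intros HN HK Hirr Hpi Hpipos Hrev Hmu Hcx Hb Hb1.
  destruct (SymmetricSpectral.symmetric_spectral_expansion N (Ksym K pi))
    as [lam Hlam]; [apply Ksym_sym; auto|].
  destruct (chain_expansion N K pi HK Hpipos Hrev Hirr mu c HN Hpi Hmu Hcx lam Hlam)
    as [w [Hw [Hd2 [Hd2c Hsum]]]].
  set (lt := fun i => if Rlt_dec 0 (w i) then lam i else b).
  assert (Hlt : forall i, (i < N)%nat -> (0 < w i /\ lt i = lam i \/ w i = 0) /\ b <= lt i < 1).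
  { intros i Hi. destruct (Hw i Hi) as [Hw0 Hwl]. unfold lt.
    destruct (Rlt_dec 0 (w i)) as [Hp|Hp]; [specialize (Hwl Hp)|]; split; lra. }
  exists w, (fun i => - 2 * ln (lt i)), (fun i => 2 * (1 - lt i)). split; [|split; [|split]].
  - intros i Hi. destruct (Hlt i Hi) as [_ Hl].
    split; [apply Hw; auto | unfold comparable_rates; apply log_rate_bounds; lra].
  - intros m. rewrite Hd2. apply sumN_ext. intros i Hi.
    destruct (Hlt i Hi) as [[[Hp ->] | ->] Hl]; [|ring].
    replace (- INR m * (-2 * ln (lam i))) with (INR (2 * m) * ln (lam i))
      by (rewrite mult_INR; simpl; ring).
    fold (Rpower (lam i) (INR (2 * m))). rewrite Rpower_pow, <- pow_mult by lra.
    f_equal. f_equal. lia.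
  - intros t. rewrite Hd2c. apply sumN_ext. intros i Hi.
    destruct (Hlt i Hi) as [[[Hp ->] | ->] Hl]; [|ring].
    f_equal. f_equal. ring.
  - exact Hsum.
Qed.

Lemma family_expsum_representation (N : nat -> nat) (K : nat -> nat -> nat -> R)
  (pi mu : nat -> nat -> R) (b : R) :
  (forall n, exists W q r : nat -> R, expsum_representation (N n) (K n) (pi n) (mu n) b W q r) ->
  exists W q r : nat -> nat -> R,
    forall n, expsum_representation (N n) (K n) (pi n) (mu n) b (W n) (q n) (r n).
Proof.
  intros H.
  destruct (choice (fun n (F : (nat -> R) * (nat -> R) * (nat -> R)) =>
    expsum_representation (N n) (K n) (pi n) (mu n) b (fst (fst F)) (snd (fst F)) (snd F))) as [F HF].
  { intros n. destruct (H n) as [W [q [r HR]]]. exists (W, q, r). exact HR. }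
  exists (fun n => fst (fst (F n))), (fun n => snd (fst (F n))), (fun n => snd (F n)). exact HF.
Qed.

Section RepresentedFamily.
Variable N : nat -> nat.
Variable K : nat -> nat -> nat -> R.
Variables pi mu : nat -> nat -> R.
Variable b : R.
Hypothesis Hb : 0 < b <= 1.
Variables W q r : nat -> nat -> R.
Hypothesis HR : forall n, expsum_representation (N n) (K n) (pi n) (mu n) b (W n) (q n) (r n).
Hypothesis Hnorm : cv_infty (fun n => sumN (N n) (fun y => mu n y ^ 2 / pi n y)).

Let HW n i (Hi : (i < N n)%nat) : 0 <= W n i := proj1 (proj1 (HR n) i Hi).
Let Hrates n i (Hi : (i < N n)%nat) : comparable_rates b (q n) (r n) i := proj2 (proj1 (HR n) i Hi).
Let Hd2 n := proj1 (proj2 (HR n)).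
Let Hd2c n := proj1 (proj2 (proj2 (HR n))).

Lemma represented_weights_diverge : cv_infty (fun n => sumN (N n) (W n)).
Proof.
  intros M. destruct (Hnorm (M + 1)) as [n0 Hn0]. exists n0. intros n Hn.
  destruct (HR n) as [_ [_ [_ ->]]]. specialize (Hn0 n Hn). lra.
Qed.

Lemma represented_rates_pos : (forall n i, (i < N n)%nat -> 0 < q n i) /\
  (forall n i, (i < N n)%nat -> 0 < r n i).
Proof. split; intros n i Hi; destruct (Hrates n i Hi) as [? [? _]]; lra. Qed.

Lemma represented_hitting_diverges eps0 : 0 < eps0 ->
  cv_infty (fun n => INR (T2 (N n) (K n) (pi n) (mu n) eps0)) \/
  cv_infty (fun n => T2c (N n) (K n) (pi n) (mu n) eps0) ->
  hitting_diverges N W q (eps0 ^ 2) /\ hitting_diverges N W r (eps0 ^ 2).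
Proof.
  intros He0 HT. destruct represented_rates_pos as [Hq Hr].
  assert (Hsum := represented_weights_diverge).
  destruct HT as [HT|HT].
  - assert (Hdq := hitting_diverges_of_T2 N K pi mu W q HW Hq Hsum Hd2 eps0 He0 HT).
    split; [exact Hdq|]. apply (hitting_diverges_rate_dominated N W q r 1); auto; [lra|].
    intros n i Hi. rewrite Rmult_1_l. apply Hrates; auto.
  - assert (Hdr := hitting_diverges_of_T2c N K pi mu W r HW Hr Hsum Hd2c eps0 He0 HT).
    split; [|exact Hdr]. apply (hitting_diverges_rate_dominated N W r q (1 / b)); auto.
    + apply Rdiv_lt_0_compat; lra.
    + apply Hrates.
Qed.

Theorem represented_L2_cutoff_iff eps0 : 0 < eps0 ->
  cv_infty (fun n => INR (T2 (N n) (K n) (pi n) (mu n) eps0)) \/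
  cv_infty (fun n => T2c (N n) (K n) (pi n) (mu n) eps0) ->
  L2_cutoff N K pi mu <-> L2_cutoff_c N K pi mu.
Proof.
  intros He0 HT. destruct represented_rates_pos as [Hq Hr].
  assert (Hes : 0 < eps0 ^ 2) by (apply pow_lt; auto).
  destruct (represented_hitting_diverges eps0 He0 HT) as [Hdq Hdr].
  rewrite (L2_cutoff_iff N K pi mu W q HW Hq Hd2 (eps0 ^ 2) Hes Hdq),
    (L2_cutoff_c_iff N K pi mu W r Hd2c).
  exact (expsum_cutoff_iff N W q r b (eps0 ^ 2) HW Hb Hrates represented_weights_diverge Hes Hdq Hdr).
Qed.

End RepresentedFamily.

Theorem corollary3p6 (N : nat -> nat) (K : nat -> nat -> nat -> R)
  (pi mu : nat -> nat -> R)
  (HN : forall n, (1 <= N n)%nat)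
  (HK : forall n, is_markov_kernel (N n) (K n))
  (Hirr : forall n, irreducible (N n) (K n))
  (Hpi : forall n, is_prob (N n) (pi n) /\ (forall x, (x < N n)%nat -> 0 < pi n x))
  (Hrev : forall n, reversible (N n) (K n) (pi n))
  (Hmu : forall n, is_prob (N n) (mu n))
  (Hhol : exists c, 1 / 2 < c /\ forall n x, (x < N n)%nat -> c <= K n x x)
  (Hnorm : cv_infty (fun n => sumN (N n) (fun y => mu n y ^ 2 / pi n y)))
  (Heps : exists eps0, 0 < eps0 /\
     (cv_infty (fun n => INR (T2 (N n) (K n) (pi n) (mu n) eps0)) \/
      cv_infty (fun n => T2c (N n) (K n) (pi n) (mu n) eps0))) :
  L2_cutoff N K pi mu <-> L2_cutoff_c N K pi mu.
Proof.
  destruct Hhol as [c [Hc Hcx]]. destruct Heps as [eps0 [He0 HT]].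
  set (b := Rmin (2 * c - 1) (1 / 2)).
  assert (Hb : 0 < b <= 2 * c - 1 /\ b <= 1 / 2)
    by (unfold b; repeat split; [apply Rmin_pos | apply Rmin_l | apply Rmin_r]; lra).
  destruct (family_expsum_representation N K pi mu b) as [W [q [r HR]]].
  { intros n. apply (chain_expsum_representation _ _ _ _ c); try apply Hpi; auto; lra. }
  apply (represented_L2_cutoff_iff N K pi mu b ltac:(lra) W q r HR Hnorm eps0 He0 HT).
Qed.
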